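(* Fix $p\in[1,\infty)$ and $r\in[0,\infty]$. For any metric spaces $X$ and $Y$, with $X\times Y$ carrying the maximum metric, there are homotopy equivalences $$\mathrm{VR}^m(X\times Y;r)\simeq \mathrm{VR}^m(X;r)\times \mathrm{VR}^m(Y;r),\qquad \check{C}^m(X\times Y;r)\simeq \check{C}^m(X;r)\times\check{C}^m(Y;r),$$ where the right-hand sides carry the maximum of the metrics of the two factors.
   Context: For a metric space $X$ and $r\in[0,\infty]$: the Vietoris–Rips complex $\mathrm{VR}(X;r)$ is the simplicial complex with vertex set $X$ whose simplices are the nonempty finite subsets of $X$ of diameter at most $r$; the Čech complex $\check{C}(X;r)$ is the simplicial complex with vertex set $X$ whose simplices are the nonempty finite subsets $\sigma\subseteq X$ with $\bigcap_{x\in\sigma}B_r(x)\neq\emptyset$, where $B_r(x)$ is the ball of radius $r$ about $x$ in $X$ (the statement holds with either open or closed balls, fixed throughout). For a simplicial complex $K$ with vertex set $X$, its metric thickening is the set of finitely supported probability measures $\mu=\sum_{i=1}^n\lambda_i\delta_{x_i}$ on $X$ (distinct $x_i$, $\lambda_i>0$, $\sum\lambda_i=1$) with $\{x_1,\dots,x_n\}\in K$, equipped with the $p$-Wasserstein metric $W_p(\mu,\nu)=\inf_\pi\left(\int_{X\times X}d(x,y)^p\,d\pi\right)^{1/p}$ (infimum over couplings $\pi$ of $\mu$ and $\nu$). $\mathrm{VR}^m(X;r)$ and $\check{C}^m(X;r)$ denote the metric thickenings of $\mathrm{VR}(X;r)$ and $\check{C}(X;r)$ respectively. *)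

From Stdlib Require Import Reals Lra List.
From Coquelicot Require Import Coquelicot.
Open Scope R_scope.

Definition is_metric {T : Type} (d : T -> T -> R) : Prop :=
  (forall x y, 0 <= d x y) /\
  (forall x y, d x y = 0 <-> x = y) /\
  (forall x y, d x y = d y x) /\
  (forall x y z, d x z <= d x y + d y z).

Definition max_dist {A B : Type} (dA : A -> A -> R) (dB : B -> B -> R)
  : A * B -> A * B -> R :=
  fun u v => Rmax (dA (fst u) (fst v)) (dB (snd u) (snd v)).

Definition dcontinuous {A B : Type} (dA : A -> A -> R) (dB : B -> B -> R)
  (f : A -> B) : Prop :=
  forall x eps, 0 < eps -> exists delta, 0 < delta /\
    forall y, dA x y < delta -> dB (f x) (f y) < eps.

(** H : [0,1] x A -> B, jointly continuous for the product topology
    (i.e. for the max of |t - s| and dA). Values outside t in [0,1] are irrelevant. *)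
Definition dhomotopy {A B : Type} (dA : A -> A -> R) (dB : B -> B -> R)
  (H : R -> A -> B) : Prop :=
  forall t x eps, 0 <= t <= 1 -> 0 < eps -> exists delta, 0 < delta /\
    forall s y, 0 <= s <= 1 -> Rabs (t - s) < delta -> dA x y < delta ->
      dB (H t x) (H s y) < eps.

Definition dhomotopic {A B : Type} (dA : A -> A -> R) (dB : B -> B -> R)
  (f g : A -> B) : Prop :=
  exists H : R -> A -> B, dhomotopy dA dB H /\
    (forall x, H 0 x = f x) /\ (forall x, H 1 x = g x).

Definition homotopy_equivalent {A B : Type} (dA : A -> A -> R) (dB : B -> B -> R)
  : Prop :=
  exists (f : A -> B) (g : B -> A),
    dcontinuous dA dB f /\ dcontinuous dB dA g /\
    dhomotopic dA dA (fun x => g (f x)) (fun x => x) /\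
    dhomotopic dB dB (fun y => f (g y)) (fun y => y).

(** * Simplicial complexes on vertex set T: predicates on (finite nonempty) subsets *)
Definition VR {T : Type} (d : T -> T -> R) (r : Rbar) (s : T -> Prop) : Prop :=
  forall x y, s x -> s y -> Rbar_le (Finite (d x y)) r.

Definition in_ball {T : Type} (closed : bool) (d : T -> T -> R) (r : Rbar)
  (x z : T) : Prop :=
  if closed then Rbar_le (Finite (d x z)) r else Rbar_lt (Finite (d x z)) r.

Definition Cech {T : Type} (closed : bool) (d : T -> T -> R) (r : Rbar)
  (s : T -> Prop) : Prop :=
  exists z, forall x, s x -> in_ball closed d r x z.

Definition sumR {A : Type} (f : A -> R) (l : list A) : R :=
  fold_right Rplus 0 (map f l).

Definition fin_prob {T : Type} (mu : T -> R) : Prop :=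
  (forall x, 0 <= mu x) /\
  exists l : list T, NoDup l /\ (forall x, mu x <> 0 -> In x l) /\ sumR mu l = 1.

Definition supp {T : Type} (mu : T -> R) : T -> Prop := fun x => 0 < mu x.

(** real powers with the convention 0 ^ q = 0 (used for q > 0 only) *)
Definition rpow (x q : R) : R := if Rle_dec x 0 then 0 else Rpower x q.

Definition coupling_cost {T : Type} (d : T -> T -> R) (p : R) (mu nu : T -> R)
  (c : R) : Prop :=
  exists (pi : T * T -> R) (l1 l2 : list T),
    NoDup l1 /\ NoDup l2 /\
    (forall a b, 0 <= pi (a, b)) /\
    (forall a b, pi (a, b) <> 0 -> In a l1 /\ In b l2) /\
    (forall a, mu a <> 0 -> In a l1) /\
    (forall b, nu b <> 0 -> In b l2) /\
    (forall a, sumR (fun b => pi (a, b)) l2 = mu a) /\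
    (forall b, sumR (fun a => pi (a, b)) l1 = nu b) /\
    c = sumR (fun a => sumR (fun b => pi (a, b) * rpow (d a b) p) l2) l1.

Definition Wp {T : Type} (d : T -> T -> R) (p : R) (mu nu : T -> R) : R :=
  rpow (real (Glb_Rbar (coupling_cost d p mu nu))) (/ p).

Definition Thick (T : Type) (K : (T -> Prop) -> Prop) : Type :=
  { mu : T -> R | fin_prob mu /\ K (supp mu) }.

Definition thick_dist {T : Type} (d : T -> T -> R) (p : R) (K : (T -> Prop) -> Prop)
  : Thick T K -> Thick T K -> R :=
  fun m n => Wp d p (proj1_sig m) (proj1_sig n).

From Stdlib Require Import Reals Lra List Permutation.
From Stdlib Require Import Classical ClassicalEpsilon FunctionalExtensionality ProofIrrelevance.
From Coquelicot Require Import Coquelicot.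
Open Scope R_scope.

(** For X × Y with the maximum metric, the maps
      f(μ) = (μ_X, μ_Y)   (the two marginals)   and   g(α, β) = α ⊗ β
    satisfy f ∘ g = id, and g ∘ f is homotopic to the identity through the
    straight-line path  μ ↦ (1 - t) μ + t (μ_X ⊗ μ_Y).  For these maps to land
    in the thickenings one only needs that the complexes are closed under
    subsets, that projections of simplices of X × Y are simplices, and that
    products of simplices are simplices; Vietoris–Rips and Čech complexes of a
    common scale r both have these properties.

    Continuity is reduced to estimates on the p-cost of couplings, since
    W_p(μ, ν) < δ iff some coupling of μ and ν has cost < δ^p.  Marginals of a
    coupling couple the marginals at no larger cost, products of couplings
    couple products at cost at most the sum, and along the path one mixes a
    coupling π of μ, μ' with a "cross" coupling of μ with μ'_X ⊗ μ'_Y whose cost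
    is bounded by cost(π) and the diameter of the support of μ. *)

Lemma sumR_cons {T} (f : T -> R) x l : sumR f (x :: l) = f x + sumR f l.
Proof. reflexivity. Qed.

Lemma sumR_nil {T} (f : T -> R) : sumR f nil = 0.
Proof. reflexivity. Qed.

Lemma sumR_app {T} (f : T -> R) l1 l2 : sumR f (l1 ++ l2) = sumR f l1 + sumR f l2.
Proof. induction l1; simpl; rewrite ?sumR_nil, ?sumR_cons, ?IHl1; lra. Qed.

Lemma sumR_perm {T} (f : T -> R) l1 l2 : Permutation l1 l2 -> sumR f l1 = sumR f l2.
Proof. induction 1; rewrite ?sumR_cons; lra. Qed.

Lemma sumR_plus {T} (f g : T -> R) l :
  sumR (fun x => f x + g x) l = sumR f l + sumR g l.
Proof. induction l; rewrite ?sumR_cons, ?sumR_nil; lra. Qed.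

Lemma sumR_scal {T} (f : T -> R) c l : sumR (fun x => c * f x) l = c * sumR f l.
Proof. induction l; rewrite ?sumR_cons, ?sumR_nil, ?IHl; ring. Qed.

Lemma sumR_ext {T} (f g : T -> R) l :
  (forall x, In x l -> f x = g x) -> sumR f l = sumR g l.
Proof.
  induction l as [|a l IH]; intros H; rewrite ?sumR_cons, ?sumR_nil; auto.
  rewrite H, IH; simpl; auto.
  intros; apply H; simpl; auto.
Qed.

Lemma sumR_le {T} (f g : T -> R) l :
  (forall x, In x l -> f x <= g x) -> sumR f l <= sumR g l.
Proof.
  induction l as [|a l IH]; intros H; rewrite ?sumR_cons, ?sumR_nil; [lra|].
  assert (f a <= g a) by (apply H; simpl; auto).
  assert (sumR f l <= sumR g l) by (apply IH; intros; apply H; simpl; auto).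
  lra.
Qed.

Lemma sumR_zero {T} (f : T -> R) l : (forall x, In x l -> f x = 0) -> sumR f l = 0.
Proof.
  induction l as [|a l IH]; intros H; rewrite ?sumR_cons, ?sumR_nil; auto.
  rewrite IH, H; simpl; auto; [lra|].
  intros; apply H; simpl; auto.
Qed.

Lemma sumR_nonneg {T} (f : T -> R) l : (forall y, 0 <= f y) -> 0 <= sumR f l.
Proof.
  intros H; rewrite <- (sumR_zero (fun _ => 0) l) by auto.
  apply sumR_le; auto.
Qed.

Lemma sumR_ge_term {T} (f : T -> R) x l :
  (forall y, 0 <= f y) -> In x l -> f x <= sumR f l.
Proof.
  intros H0 E; induction l as [|a l IH]; [inversion E|].
  rewrite sumR_cons; destruct E as [<-|E].
  - assert (0 <= sumR f l) by (apply sumR_nonneg; auto); lra.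
  - specialize (H0 a); specialize (IH E); lra.
Qed.

Lemma sumR_swap {A B} (h : A -> B -> R) l1 l2 :
  sumR (fun a => sumR (fun b => h a b) l2) l1
  = sumR (fun b => sumR (fun a => h a b) l1) l2.
Proof.
  induction l1; rewrite ?sumR_cons, ?sumR_nil.
  - rewrite sumR_zero; auto.
  - rewrite IHl1, <- sumR_plus; apply sumR_ext; intros; rewrite sumR_cons; auto.
Qed.

Lemma sumR_prod {A B} (h : A * B -> R) l1 l2 :
  sumR h (list_prod l1 l2) = sumR (fun a => sumR (fun b => h (a, b)) l2) l1.
Proof.
  induction l1 as [|a l1 IH]; simpl; auto.
  rewrite sumR_app, sumR_cons, IH; f_equal.
  clear; induction l2; simpl; auto; rewrite !sumR_cons, IHl2; auto.
Qed.

Lemma sumR_uniq {T} (f : T -> R) l1 : forall l2, NoDup l1 -> NoDup l2 ->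
  (forall y, In y l1 -> ~ In y l2 -> f y = 0) ->
  (forall y, In y l2 -> ~ In y l1 -> f y = 0) -> sumR f l1 = sumR f l2.
Proof.
  induction l1 as [|x l1 IH]; intros l2 N1 N2 H1 H2.
  - rewrite sumR_nil; symmetry; apply sumR_zero; intros y Hy; apply H2; auto.
  - inversion N1; subst; rewrite sumR_cons.
    destruct (classic (In x l2)) as [Hx|Hx].
    + destruct (in_split _ _ Hx) as [A [B ->]].
      assert (Hperm : Permutation (A ++ x :: B) (x :: A ++ B))
        by (apply Permutation_sym, Permutation_middle).
      rewrite (sumR_perm f _ _ Hperm), sumR_cons; f_equal.
      assert (N2' : NoDup (x :: A ++ B)) by (eapply Permutation_NoDup; eauto).
      inversion N2'; subst; apply IH; auto.
      * intros y Hy Hn; apply H1; simpl; auto; intros Hin.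
        apply in_app_or in Hin; destruct Hin as [Hin|[Hin|Hin]]; subst;
          auto with datatypes.
      * intros y Hy Hn; apply H2.
        -- apply in_or_app; apply in_app_or in Hy; simpl; tauto.
        -- intros [<-|Hin]; auto.
    + rewrite (H1 x), (IH l2); simpl; auto; [lra| |].
      * intros y Hy Hn; apply H1; simpl; auto.
      * intros y Hy Hn; apply H2; auto; intros [<-|Hin]; auto.
Qed.

Lemma NoDup_prod {A B} (l1 : list A) (l2 : list B) :
  NoDup l1 -> NoDup l2 -> NoDup (list_prod l1 l2).
Proof.
  induction 1; intros N2; simpl; [constructor|].
  apply NoDup_app; auto.
  - apply FinFun.Injective_map_NoDup; auto; intros u v E; inversion E; auto.
  - intros [a b] Hm Hp; apply in_map_iff in Hm; destruct Hm as [b' [E _]].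
    inversion E; subst; apply in_prod_iff in Hp; tauto.
Qed.

(** Totals of finitely supported real functions.  [fsum f] is the sum of [f]
    over any duplicate-free list containing its support (and 0 if [f] is not
    finitely supported); this frees the later arguments from list bookkeeping. *)

Definition eq_dec_classic (T : Type) : forall x y : T, {x = y} + {x <> y} :=
  fun x y => excluded_middle_informative (x = y).

Definition finsupp {T} (f : T -> R) : Prop := exists l, forall x, f x <> 0 -> In x l.

Definition fsum {T} (f : T -> R) : R :=
  match excluded_middle_informative (finsupp f) with
  | left H =>
      sumR f (nodup (eq_dec_classic T) (proj1_sig (constructive_indefinite_description _ H)))
  | right _ => 0
  end.

Lemma fsum_spec {T} (f : T -> R) l :
  NoDup l -> (forall x, f x <> 0 -> In x l) -> fsum f = sumR f l.
Proof.
  intros N H; unfold fsum; destruct excluded_middle_informative as [Hf|Hf].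
  - destruct constructive_indefinite_description as [l' Hl']; simpl.
    apply sumR_uniq; [apply NoDup_nodup | auto | |];
      intros y Hy Hn; destruct (Req_dec (f y) 0); auto; exfalso.
    + auto.
    + apply Hn, nodup_In; auto.
  - exfalso; apply Hf; exists l; auto.
Qed.

Lemma finsupp_nodup {T} (f : T -> R) :
  finsupp f -> exists l, NoDup l /\ forall x, f x <> 0 -> In x l.
Proof.
  intros [l H]; exists (nodup (eq_dec_classic T) l); split; [apply NoDup_nodup|].
  intros; apply nodup_In; auto.
Qed.

Lemma finsupp_ext {T} (f g : T -> R) : (forall x, f x = g x) -> finsupp f -> finsupp g.
Proof. intros E [l H]; exists l; intros x Hx; apply H; rewrite E; auto. Qed.

Lemma finsupp_plus {T} (f g : T -> R) :
  finsupp f -> finsupp g -> finsupp (fun x => f x + g x).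
Proof.
  intros [l1 H1] [l2 H2]; exists (l1 ++ l2); intros x Hx; apply in_or_app.
  destruct (Req_dec (f x) 0); [right; apply H2; lra | left; auto].
Qed.

Lemma finsupp_mul_l {T} (f g : T -> R) : finsupp f -> finsupp (fun x => g x * f x).
Proof. intros [l H]; exists l; intros x Hx; apply H; intro E; apply Hx; rewrite E; ring. Qed.

Lemma finsupp_mul_r {T} (f g : T -> R) : finsupp f -> finsupp (fun x => f x * g x).
Proof. intros [l H]; exists l; intros x Hx; apply H; intro E; apply Hx; rewrite E; ring. Qed.

Lemma finsupp_comp {A B} (g : B -> R) (F : A -> B) (G : B -> A) :
  (forall x, G (F x) = x) -> finsupp g -> finsupp (fun x => g (F x)).
Proof.
  intros HG [l H]; exists (map G l); intros x Hx; rewrite <- (HG x); apply in_map; auto.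
Qed.

Lemma finsupp_row {A B} (h : A * B -> R) a : finsupp h -> finsupp (fun b => h (a, b)).
Proof.
  intros [l H]; exists (map snd l); intros b Hb.
  change b with (snd (a, b)); apply in_map; auto.
Qed.

Lemma finsupp_col {A B} (h : A * B -> R) b : finsupp h -> finsupp (fun a => h (a, b)).
Proof.
  intros [l H]; exists (map fst l); intros a Ha.
  change a with (fst (a, b)); apply in_map; auto.
Qed.

Lemma finsupp_prod {A B} (f : A -> R) (g : B -> R) :
  finsupp f -> finsupp g -> finsupp (fun u => f (fst u) * g (snd u)).
Proof.
  intros [l1 H1] [l2 H2]; exists (list_prod l1 l2); intros [a b] Hab; simpl in Hab.
  apply in_prod_iff; split; [apply H1 | apply H2]; intro E; apply Hab; rewrite E; ring.
Qed.

Lemma fsum_ext {T} (f g : T -> R) : (forall x, f x = g x) -> fsum f = fsum g.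
Proof. intros H; replace g with f; auto; apply functional_extensionality; auto. Qed.

Lemma fsum_zero {T} (f : T -> R) : (forall x, f x = 0) -> fsum f = 0.
Proof.
  intros H; rewrite (fsum_spec f nil); auto; [constructor|].
  intros x Hx; exfalso; auto.
Qed.

Lemma fsum_nonzero {T} (f : T -> R) : fsum f <> 0 -> exists x, f x <> 0.
Proof.
  intros H; apply NNPP; intros Hn; apply H, fsum_zero; intros x.
  destruct (Req_dec (f x) 0); auto; exfalso; eauto.
Qed.

Lemma fsum_plus {T} (f g : T -> R) :
  finsupp f -> finsupp g -> fsum (fun x => f x + g x) = fsum f + fsum g.
Proof.
  intros Hf Hg; destruct (finsupp_nodup _ (finsupp_plus f g Hf Hg)) as [l [N Hl]].
  destruct Hf as [l1 H1], Hg as [l2 H2].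
  set (l' := nodup (eq_dec_classic T) (l1 ++ l2)).
  assert (I1 : forall x, f x <> 0 -> In x l') by (intros; apply nodup_In, in_or_app; auto).
  assert (I2 : forall x, g x <> 0 -> In x l') by (intros; apply nodup_In, in_or_app; auto).
  rewrite (fsum_spec f l'), (fsum_spec g l'), (fsum_spec _ l'); try apply NoDup_nodup; auto.
  - apply sumR_plus.
  - intros x Hx; destruct (Req_dec (f x) 0); [apply I2; lra | auto].
Qed.

Lemma fsum_scal {T} (f : T -> R) c : fsum (fun x => c * f x) = c * fsum f.
Proof.
  destruct (classic (finsupp f)) as [Hf|Hf].
  - destruct (finsupp_nodup f Hf) as [l [N H]].
    rewrite (fsum_spec f l), (fsum_spec _ l); auto; [apply sumR_scal|].
    intros x Hx; apply H; intro E; apply Hx; rewrite E; ring.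
  - destruct (Req_dec c 0) as [->|Hc]; [rewrite fsum_zero; intros; ring|].
    assert (~ finsupp (fun x => c * f x)).
    { intros [l Hl]; apply Hf; exists l; intros x Hx; apply Hl; intro E.
      apply Rmult_integral in E; tauto. }
    unfold fsum; do 2 destruct excluded_middle_informative; try tauto; ring.
Qed.

Lemma fsum_le {T} (f g : T -> R) :
  finsupp f -> finsupp g -> (forall x, f x <= g x) -> fsum f <= fsum g.
Proof.
  intros [l1 H1] [l2 H2] H.
  set (l := nodup (eq_dec_classic T) (l1 ++ l2)).
  rewrite (fsum_spec f l), (fsum_spec g l); try apply NoDup_nodup.
  - apply sumR_le; auto.
  - intros; apply nodup_In, in_or_app; auto.
  - intros; apply nodup_In, in_or_app; auto.
Qed.

Lemma fsum_nonneg {T} (f : T -> R) : (forall x, 0 <= f x) -> 0 <= fsum f.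
Proof.
  intros H; destruct (classic (finsupp f)) as [Hf|Hf].
  - rewrite <- (fsum_zero (fun _ : T => 0)) by auto; apply fsum_le; auto.
    exists nil; intros x Hx; exfalso; auto.
  - unfold fsum; destruct excluded_middle_informative; try tauto; lra.
Qed.

Lemma fsum_pos {T} (f : T -> R) : (forall x, 0 <= f x) -> 0 < fsum f -> exists x, 0 < f x.
Proof.
  intros H Hp; destruct (fsum_nonzero f) as [x Hx]; [lra|].
  exists x; specialize (H x); lra.
Qed.

Lemma fsum_ge_term {T} (f : T -> R) x :
  (forall y, 0 <= f y) -> finsupp f -> f x <= fsum f.
Proof.
  intros H0 Hf; destruct (finsupp_nodup f Hf) as [l [N Hl]]; rewrite (fsum_spec f l); auto.
  destruct (Req_dec (f x) 0) as [E|E]; [rewrite E; apply sumR_nonneg; auto|].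
  apply sumR_ge_term; auto.
Qed.

Lemma fsum_reindex {A B} (g : B -> R) (F : A -> B) (G : B -> A) :
  (forall x, G (F x) = x) -> (forall y, F (G y) = y) -> finsupp g ->
  fsum (fun x => g (F x)) = fsum g.
Proof.
  intros H1 H2 Hg; destruct (finsupp_nodup g Hg) as [l [N Hl]].
  rewrite (fsum_spec g l), (fsum_spec _ (map G l)); auto.
  - unfold sumR; rewrite map_map; f_equal; apply map_ext_in; intros; rewrite H2; auto.
  - apply FinFun.Injective_map_NoDup; auto.
    intros u v E; rewrite <- (H2 u), <- (H2 v), E; auto.
  - intros x Hx; rewrite <- (H1 x); apply in_map; auto.
Qed.

Lemma finsupp_pair_lists {A B} (h : A * B -> R) : finsupp h ->
  exists l1 l2, NoDup l1 /\ NoDup l2 /\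
    forall a b, h (a, b) <> 0 -> In a l1 /\ In b l2.
Proof.
  intros Hh; destruct (finsupp_nodup h Hh) as [l [N H]].
  exists (nodup (eq_dec_classic A) (map fst l)), (nodup (eq_dec_classic B) (map snd l)).
  split; [apply NoDup_nodup | split; [apply NoDup_nodup|]].
  intros a b Hab; apply H in Hab; split; apply nodup_In.
  - change a with (fst (a, b)); apply in_map; auto.
  - change b with (snd (a, b)); apply in_map; auto.
Qed.

Lemma fsum_fubini {A B} (h : A * B -> R) :
  finsupp h -> fsum h = fsum (fun a => fsum (fun b => h (a, b))).
Proof.
  intros Hh; destruct (finsupp_pair_lists h Hh) as [l1 [l2 [N1 [N2 HI]]]].
  rewrite (fsum_spec h (list_prod l1 l2)), sumR_prod, (fsum_spec _ l1); auto.
  - apply sumR_ext; intros a _; symmetry; apply fsum_spec; auto.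
    intros b Hb; apply (HI a b Hb).
  - intros a Ha; apply fsum_nonzero in Ha; destruct Ha as [b Hb]; apply (HI a b Hb).
  - apply NoDup_prod; auto.
  - intros [a b] Hab; apply in_prod_iff, HI; auto.
Qed.

Lemma fsum_swap {A B} (h : A * B -> R) : finsupp h ->
  fsum (fun a => fsum (fun b => h (a, b))) = fsum (fun b => fsum (fun a => h (a, b))).
Proof.
  intros Hh; destruct (finsupp_pair_lists h Hh) as [l1 [l2 [N1 [N2 HI]]]].
  rewrite (fsum_spec _ l1), (fsum_spec _ l2); auto.
  - rewrite (sumR_ext _ (fun a => sumR (fun b => h (a, b)) l2)), sumR_swap.
    + apply sumR_ext; intros b _; symmetry; apply fsum_spec; auto.
      intros a Ha; apply (HI a b Ha).
    + intros a _; apply fsum_spec; auto; intros b Hb; apply (HI a b Hb).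
  - intros b Hb; apply fsum_nonzero in Hb; destruct Hb as [a Ha]; apply (HI a b Ha).
  - intros a Ha; apply fsum_nonzero in Ha; destruct Ha as [b Hb]; apply (HI a b Hb).
Qed.

Lemma fsum_prod {A B} (f : A -> R) (g : B -> R) : finsupp f -> finsupp g ->
  fsum (fun u => f (fst u) * g (snd u)) = fsum f * fsum g.
Proof.
  intros Hf Hg; rewrite fsum_fubini by (apply finsupp_prod; auto); simpl.
  rewrite (fsum_ext _ (fun a => fsum g * f a)), fsum_scal; [ring|].
  intros a; rewrite fsum_scal; ring.
Qed.

Lemma rpow_nonneg x q : 0 <= rpow x q.
Proof. unfold rpow; destruct Rle_dec; [lra | unfold Rpower; left; apply exp_pos]. Qed.

Lemma rpow_zero q : rpow 0 q = 0.
Proof. unfold rpow; destruct Rle_dec; lra. Qed.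

Lemma rpow_pos x q : 0 < x -> rpow x q = Rpower x q.
Proof. intros; unfold rpow; destruct Rle_dec; lra. Qed.

Lemma rpow_pos_lt x q : 0 < x -> 0 < rpow x q.
Proof. intros; rewrite rpow_pos by lra; apply exp_pos. Qed.

Lemma rpow_le x y q : 0 <= x <= y -> 0 < q -> rpow x q <= rpow y q.
Proof.
  intros [H1 H2] Hq; destruct (Req_dec x 0) as [->|Hx].
  - rewrite rpow_zero; apply rpow_nonneg.
  - rewrite !rpow_pos by lra; apply Rle_Rpower_l; lra.
Qed.

Lemma rpow_lt x y q : 0 <= x < y -> 0 < q -> rpow x q < rpow y q.
Proof.
  intros [H1 H2] Hq; destruct (Req_dec x 0) as [->|Hx].
  - rewrite rpow_zero; apply rpow_pos_lt; lra.
  - rewrite !rpow_pos by lra; apply Rlt_Rpower_l; lra.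
Qed.

Lemma rpow_root_of_pow x p : 0 <= x -> 0 < p -> rpow (rpow x p) (/ p) = x.
Proof.
  intros Hx Hp; destruct (Req_dec x 0) as [->|H]; [rewrite !rpow_zero; auto|].
  rewrite (rpow_pos x), rpow_pos by (try apply exp_pos; lra).
  rewrite Rpower_mult, Rinv_r, Rpower_1; lra.
Qed.

Lemma rpow_pow_of_root x p : 0 <= x -> 0 < p -> rpow (rpow x (/ p)) p = x.
Proof.
  intros Hx Hp; destruct (Req_dec x 0) as [->|H]; [rewrite !rpow_zero; auto|].
  rewrite (rpow_pos x), rpow_pos by (try apply exp_pos; lra).
  rewrite Rpower_mult, Rinv_l, Rpower_1; lra.
Qed.

Lemma rpow_mul x y q : 0 <= x -> 0 <= y -> rpow (x * y) q = rpow x q * rpow y q.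
Proof.
  intros Hx Hy; destruct (Req_dec x 0) as [->|H1]; [rewrite Rmult_0_l, !rpow_zero; ring|].
  destruct (Req_dec y 0) as [->|H2]; [rewrite Rmult_0_r, !rpow_zero; ring|].
  rewrite !rpow_pos; try lra; [rewrite Rpower_mult_distr; lra | apply Rmult_lt_0_compat; lra].
Qed.

Lemma rpow_max a b q : rpow (Rmax a b) q <= rpow a q + rpow b q.
Proof.
  assert (H1 := rpow_nonneg a q); assert (H2 := rpow_nonneg b q).
  unfold Rmax; destruct Rle_dec; lra.
Qed.

Lemma rpow_add a b q : 0 <= a -> 0 <= b -> 0 < q ->
  rpow (a + b) q <= rpow 2 q * (rpow a q + rpow b q).
Proof.
  intros Ha Hb Hq.
  assert (Hm : 0 <= Rmax a b) by (unfold Rmax; destruct Rle_dec; lra).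
  apply Rle_trans with (rpow (2 * Rmax a b) q).
  - apply rpow_le; auto; split; [lra | unfold Rmax; destruct Rle_dec; lra].
  - rewrite rpow_mul by lra.
    apply Rmult_le_compat_l; [apply rpow_nonneg | apply rpow_max].
Qed.

Lemma fin_prob_iff {T} (mu : T -> R) :
  fin_prob mu <-> (forall x, 0 <= mu x) /\ finsupp mu /\ fsum mu = 1.
Proof.
  split.
  - intros [H [l [N [Hl Hs]]]]; repeat split; auto.
    + exists l; auto.
    + rewrite (fsum_spec mu l); auto.
  - intros [H [Hf Hs]]; split; auto.
    destruct (finsupp_nodup mu Hf) as [l [N Hl]]; exists l; repeat split; auto.
    rewrite <- (fsum_spec mu l); auto.
Qed.

Lemma fin_prob_nonneg {T} (mu : T -> R) : fin_prob mu -> forall x, 0 <= mu x.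
Proof. intros [H _]; auto. Qed.

Definition indic (P : Prop) : R := if excluded_middle_informative P then 1 else 0.

Lemma indic_true (P : Prop) : P -> indic P = 1.
Proof. unfold indic; destruct excluded_middle_informative; tauto. Qed.

Lemma indic_false (P : Prop) : ~ P -> indic P = 0.
Proof. unfold indic; destruct excluded_middle_informative; tauto. Qed.

Lemma indic_nonzero (P : Prop) : indic P <> 0 -> P.
Proof. unfold indic; destruct excluded_middle_informative; auto; lra. Qed.

Lemma indic_nonneg (P : Prop) : 0 <= indic P.
Proof. unfold indic; destruct excluded_middle_informative; lra. Qed.

Lemma indic_sym {A} (x y : A) : indic (x = y) = indic (y = x).
Proof.
  destruct (classic (x = y)); [rewrite !indic_true | rewrite !indic_false]; auto.
Qed.

Lemma fsum_dirac {A} (g : A -> R) c : fsum (fun z => indic (c = z) * g z) = g c.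
Proof.
  rewrite (fsum_spec _ (c :: nil)); [rewrite sumR_cons, sumR_nil, indic_true; auto; ring| |].
  - repeat constructor; auto.
  - intros z Hz; left; apply indic_nonzero; intro E; apply Hz; rewrite E; ring.
Qed.

Definition push {A B} (F : A -> B) (f : A -> R) : B -> R :=
  fun b => fsum (fun a => f a * indic (F a = b)).

Lemma finsupp_push {A B} (F : A -> B) f : finsupp f -> finsupp (push F f).
Proof.
  intros [l H]; exists (map F l); intros b Hb.
  apply fsum_nonzero in Hb; destruct Hb as [a Ha].
  assert (f a <> 0) by (intro E; apply Ha; rewrite E; ring).
  assert (F a = b) by (apply indic_nonzero; intro E; apply Ha; rewrite E; ring).
  subst; apply in_map; auto.
Qed.

Lemma push_nonneg {A B} (F : A -> B) f : (forall a, 0 <= f a) -> forall b, 0 <= push F f b.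
Proof.
  intros H b; apply fsum_nonneg; intros; apply Rmult_le_pos; auto; apply indic_nonneg.
Qed.

Lemma push_spec {A B} (F : A -> B) f h : finsupp f ->
  fsum (fun z => push F f z * h z) = fsum (fun u => f u * h (F u)).
Proof.
  intros Hf; unfold push.
  set (H := fun w : B * A => f (snd w) * indic (F (snd w) = fst w) * h (fst w)).
  assert (HH : finsupp H).
  { destruct Hf as [l Hl]; exists (map (fun u => (F u, u)) l).
    intros [z u] Hz; unfold H in Hz; simpl in Hz.
    assert (f u <> 0) by (intro E; apply Hz; rewrite E; ring).
    assert (F u = z) by (apply indic_nonzero; intro E; apply Hz; rewrite E; ring).
    subst; apply (in_map (fun u => (F u, u))); auto. }
  transitivity (fsum (fun z => fsum (fun u => H (z, u)))).
  { apply fsum_ext; intros z; rewrite Rmult_comm, <- fsum_scal.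
    apply fsum_ext; intros u; unfold H; simpl; ring. }
  rewrite (fsum_swap H HH); apply fsum_ext; intros u; unfold H; simpl.
  rewrite <- (fsum_dirac h (F u)), <- fsum_scal; apply fsum_ext; intros z; ring.
Qed.

Lemma fsum_push {A B} (F : A -> B) f : finsupp f -> fsum (push F f) = fsum f.
Proof.
  intros Hf; rewrite <- (fsum_ext (fun z => push F f z * 1)) by (intros; ring).
  rewrite push_spec by auto; apply fsum_ext; intros; ring.
Qed.

Lemma push_comp {A B C} (F : A -> B) (G : B -> C) f : finsupp f ->
  forall c, push G (push F f) c = push (fun a => G (F a)) f c.
Proof. intros Hf c; unfold push at 1; rewrite (push_spec F f (fun w => indic (G w = c))); auto. Qed.

Lemma push_fst {A B} (pi : A * B -> R) : finsupp pi ->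
  forall a, fsum (fun b => pi (a, b)) = push fst pi a.
Proof.
  intros Hf a; unfold push; rewrite fsum_fubini by (apply finsupp_mul_r; auto); simpl.
  rewrite <- (fsum_dirac (fun a0 => fsum (fun b => pi (a0, b))) a).
  apply fsum_ext; intros a0; rewrite indic_sym, <- fsum_scal; apply fsum_ext; intros; ring.
Qed.

Lemma push_snd {A B} (pi : A * B -> R) : finsupp pi ->
  forall b, fsum (fun a => pi (a, b)) = push snd pi b.
Proof.
  intros Hf b; unfold push; rewrite fsum_fubini by (apply finsupp_mul_r; auto); simpl.
  assert (E := fsum_swap (fun w => pi w * indic (snd w = b)) (finsupp_mul_r _ _ Hf)).
  simpl in E; rewrite E, <- (fsum_dirac (fun b0 => fsum (fun a => pi (a, b0))) b).
  apply fsum_ext; intros b0; rewrite indic_sym, <- fsum_scal; apply fsum_ext; intros; ring.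
Qed.

Lemma fin_prob_push {A B} (F : A -> B) mu : fin_prob mu -> fin_prob (push F mu).
Proof.
  rewrite !fin_prob_iff; intros [H0 [H1 H2]]; split; [apply push_nonneg; auto|].
  split; [apply finsupp_push; auto | rewrite fsum_push; auto].
Qed.

Lemma supp_push {A B} (F : A -> B) mu b : (forall a, 0 <= mu a) ->
  supp (push F mu) b -> exists a, supp mu a /\ F a = b.
Proof.
  intros H0 H; unfold supp, push in H; apply fsum_pos in H;
    [|intros; apply Rmult_le_pos; auto; apply indic_nonneg].
  destruct H as [a Ha]; exists a.
  assert (indic (F a = b) <> 0) by (intro E; rewrite E in Ha; lra).
  split; [|apply indic_nonzero; auto].
  unfold supp; assert (h := indic_nonneg (F a = b)); specialize (H0 a).
  destruct (Req_dec (mu a) 0) as [E|E]; [rewrite E in Ha; lra | lra].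
Qed.

Definition coupling {A B} (pi : A * B -> R) (mu : A -> R) (nu : B -> R) : Prop :=
  (forall u, 0 <= pi u) /\ finsupp pi /\
  (forall a, fsum (fun b => pi (a, b)) = mu a) /\
  (forall b, fsum (fun a => pi (a, b)) = nu b).

Definition cost {T} (d : T -> T -> R) (p : R) (pi : T * T -> R) : R :=
  fsum (fun u => pi u * rpow (d (fst u) (snd u)) p).

Lemma coupling_finsupp {A B} (pi : A * B -> R) mu nu : coupling pi mu nu -> finsupp pi.
Proof. intros [_ [h _]]; auto. Qed.

Lemma cost_nonneg {T} (d : T -> T -> R) p pi mu nu : coupling pi mu nu -> 0 <= cost d p pi.
Proof.
  intros [H _]; apply fsum_nonneg; intros; apply Rmult_le_pos; auto; apply rpow_nonneg.
Qed.

Lemma coupling_total {A B} (pi : A * B -> R) mu nu : coupling pi mu nu -> fsum pi = fsum mu.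
Proof. intros [H0 [H1 [H2 H3]]]; rewrite fsum_fubini; auto; apply fsum_ext; auto. Qed.

Lemma coupling_of_push {A B} (pi : A * B -> R) mu nu : (forall u, 0 <= pi u) -> finsupp pi ->
  (forall a, push fst pi a = mu a) -> (forall b, push snd pi b = nu b) -> coupling pi mu nu.
Proof.
  intros H0 H1 H2 H3; repeat split; auto; intros.
  - rewrite push_fst; auto.
  - rewrite push_snd; auto.
Qed.

Lemma coupling_marginals {A B} (pi : A * B -> R) mu nu :
  coupling pi mu nu -> mu = push fst pi /\ nu = push snd pi.
Proof.
  intros [H0 [H1 [H2 H3]]]; split; apply functional_extensionality; intros.
  - rewrite <- push_fst; auto.
  - rewrite <- push_snd; auto.
Qed.

(** The two ways of presenting couplings agree: the list-based
    [coupling_cost] used to define [Wp] and the total-based [coupling]/[cost]. *)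
Lemma coupling_cost_of_coupling {T} (d : T -> T -> R) p pi mu nu :
  coupling pi mu nu -> coupling_cost d p mu nu (cost d p pi).
Proof.
  intros [Hp [Hf [H1 H2]]].
  destruct (finsupp_pair_lists pi Hf) as [l1 [l2 [N1 [N2 HI]]]].
  exists pi, l1, l2; do 3 (split; [auto|]); split; [exact HI|].
  split; [|split; [|split; [|split]]].
  - intros a Ha; rewrite <- H1 in Ha; apply fsum_nonzero in Ha.
    destruct Ha as [b Hb]; apply (HI a b Hb).
  - intros b Hb; rewrite <- H2 in Hb; apply fsum_nonzero in Hb.
    destruct Hb as [a Ha]; apply (HI a b Ha).
  - intros a; rewrite <- H1; symmetry; apply fsum_spec; auto.
    intros b Hb; apply (HI a b Hb).
  - intros b; rewrite <- H2; symmetry; apply fsum_spec; auto.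
    intros a Ha; apply (HI a b Ha).
  - unfold cost; rewrite fsum_fubini by (apply finsupp_mul_r; auto); simpl.
    rewrite (fsum_spec _ l1); auto.
    + apply sumR_ext; intros a _; apply fsum_spec; auto.
      intros b Hb; apply (HI a b); intro E; apply Hb; rewrite E; ring.
    + intros a Ha; apply fsum_nonzero in Ha; destruct Ha as [b Hb]; apply (HI a b).
      intro E; apply Hb; rewrite E; ring.
Qed.

Lemma coupling_of_coupling_cost {T} (d : T -> T -> R) p mu nu c :
  coupling_cost d p mu nu c -> exists pi, coupling pi mu nu /\ c = cost d p pi.
Proof.
  intros [pi [l1 [l2 [N1 [N2 [Hp [HI [Hm [Hn [H1 [H2 Hc]]]]]]]]]]].
  assert (Hf : finsupp pi)
    by (exists (list_prod l1 l2); intros [a b] H; apply in_prod_iff, HI; auto).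
  exists pi; split; [repeat split|].
  - intros [a b]; apply Hp.
  - auto.
  - intros a; rewrite <- H1; apply fsum_spec; auto; intros b Hb; apply (HI a b Hb).
  - intros b; rewrite <- H2; apply fsum_spec; auto; intros a Ha; apply (HI a b Ha).
  - rewrite Hc; unfold cost; rewrite fsum_fubini by (apply finsupp_mul_r; auto); simpl.
    symmetry; rewrite (fsum_spec _ l1); auto.
    + apply sumR_ext; intros a _; apply fsum_spec; auto.
      intros b Hb; apply (HI a b); intro E; apply Hb; rewrite E; ring.
    + intros a Ha; apply fsum_nonzero in Ha; destruct Ha as [b Hb]; apply (HI a b).
      intro E; apply Hb; rewrite E; ring.
Qed.

Lemma coupling_independent {A B} (mu : A -> R) (nu : B -> R) : fin_prob mu -> fin_prob nu ->
  coupling (fun u => mu (fst u) * nu (snd u)) mu nu.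
Proof.
  rewrite !fin_prob_iff; intros [Hm0 [Hm1 Hm2]] [Hn0 [Hn1 Hn2]].
  repeat split; [intros; apply Rmult_le_pos; auto | apply finsupp_prod; auto | |];
    intros; simpl.
  - rewrite fsum_scal, Hn2; ring.
  - rewrite (fsum_ext _ (fun a => nu b * mu a)) by (intros; ring); rewrite fsum_scal, Hm2; ring.
Qed.

Lemma glb_cost_finite {T} (d : T -> T -> R) p mu nu : fin_prob mu -> fin_prob nu ->
  exists g, Glb_Rbar (coupling_cost d p mu nu) = Finite g /\ 0 <= g /\
    forall pi, coupling pi mu nu -> g <= cost d p pi.
Proof.
  intros Hm Hn.
  destruct (Glb_Rbar_correct (coupling_cost d p mu nu)) as [Hlb Hg].
  assert (H0 : Rbar_le (Finite 0) (Glb_Rbar (coupling_cost d p mu nu))).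
  { apply Hg; intros c Hcc; destruct (coupling_of_coupling_cost d p mu nu c Hcc) as [pi [Hpi ->]].
    simpl; eapply cost_nonneg; eauto. }
  assert (H1 := Hlb _ (coupling_cost_of_coupling d p _ mu nu (coupling_independent mu nu Hm Hn))).
  destruct (Glb_Rbar (coupling_cost d p mu nu)) as [g| |]; simpl in *; try tauto.
  exists g; repeat split; auto.
  intros pi Hpi; apply (Hlb _ (coupling_cost_of_coupling d p pi mu nu Hpi)).
Qed.

Lemma Wp_le_cost {T} (d : T -> T -> R) p pi mu nu : 0 < p ->
  fin_prob mu -> fin_prob nu -> coupling pi mu nu ->
  Wp d p mu nu <= rpow (cost d p pi) (/ p).
Proof.
  intros Hp Hm Hn Hc; destruct (glb_cost_finite d p mu nu Hm Hn) as [g [Eg [g0 Hg]]].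
  unfold Wp; rewrite Eg; simpl.
  apply rpow_le; [split; auto | apply Rinv_0_lt_compat; auto].
Qed.

Lemma cheap_coupling {T} (d : T -> T -> R) p mu nu delta : 0 < p ->
  fin_prob mu -> fin_prob nu -> Wp d p mu nu < delta ->
  exists pi, coupling pi mu nu /\ cost d p pi < rpow delta p.
Proof.
  intros Hp Hm Hn HW; destruct (glb_cost_finite d p mu nu Hm Hn) as [g [Eg [g0 Hg]]].
  unfold Wp in HW; rewrite Eg in HW; simpl in HW.
  assert (Hd : 0 < delta) by (eapply Rle_lt_trans; [apply rpow_nonneg | apply HW]).
  assert (Hgl : g < rpow delta p).
  { destruct (Rlt_or_le g (rpow delta p)) as [h|h]; auto; exfalso.
    assert (rpow (rpow delta p) (/ p) <= rpow g (/ p))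
      by (apply rpow_le; [split; auto; apply rpow_nonneg | apply Rinv_0_lt_compat; auto]).
    rewrite rpow_root_of_pow in H; lra. }
  apply NNPP; intros Hno.
  destruct (Glb_Rbar_correct (coupling_cost d p mu nu)) as [_ Hglb].
  assert (Hl : Rbar_le (Finite (rpow delta p)) (Glb_Rbar (coupling_cost d p mu nu))).
  { apply Hglb; intros c Hcc; destruct (coupling_of_coupling_cost d p mu nu c Hcc) as [pi [Hpi ->]].
    simpl; destruct (Rle_lt_dec (rpow delta p) (cost d p pi)); auto; exfalso; eauto. }
  rewrite Eg in Hl; simpl in Hl; lra.
Qed.

Lemma Wp_small_of_cost {T} (d : T -> T -> R) p : 0 < p -> forall eps, 0 < eps ->
  exists E, 0 < E /\ forall pi mu nu, fin_prob mu -> fin_prob nu ->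
    coupling pi mu nu -> cost d p pi < E -> Wp d p mu nu < eps.
Proof.
  intros Hp eps He; exists (rpow eps p); split; [apply rpow_pos_lt; auto|].
  intros pi mu nu Hm Hn Hc Hlt; eapply Rle_lt_trans; [apply (Wp_le_cost d p pi); auto|].
  rewrite <- (rpow_root_of_pow eps p) by lra.
  apply rpow_lt; [split; auto; eapply cost_nonneg; eauto | apply Rinv_0_lt_compat; auto].
Qed.

Lemma cost_small_of_Wp {T} (d : T -> T -> R) p : 0 < p -> forall E, 0 < E ->
  exists delta, 0 < delta /\ forall mu nu, fin_prob mu -> fin_prob nu ->
    Wp d p mu nu < delta -> exists pi, coupling pi mu nu /\ cost d p pi < E.
Proof.
  intros Hp E HE; exists (rpow E (/ p)); split; [apply rpow_pos_lt; auto|].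
  intros mu nu Hm Hn HW; destruct (cheap_coupling d p mu nu _ Hp Hm Hn HW) as [pi [H1 H2]].
  exists pi; split; auto; rewrite rpow_pow_of_root in H2; lra.
Qed.

Definition swap {A B} (w : A * B) : B * A := (snd w, fst w).

Definition transpose {A B} (pi : A * B -> R) : B * A -> R := fun w => pi (swap w).

Lemma coupling_transpose {A B} (pi : A * B -> R) mu nu :
  coupling pi mu nu -> coupling (transpose pi) nu mu.
Proof.
  intros [H0 [H1 [H2 H3]]]; split; [intros; apply H0|].
  split; [apply (finsupp_comp pi swap swap); auto; intros [a b]; reflexivity|].
  split; intros; unfold transpose, swap; simpl; auto.
Qed.

Lemma cost_transpose {T} (d : T -> T -> R) p (pi : T * T -> R) :
  (forall x y, d x y = d y x) -> finsupp pi -> cost d p (transpose pi) = cost d p pi.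
Proof.
  intros Hs Hf; unfold cost, transpose.
  rewrite <- (fsum_reindex (fun u => pi u * rpow (d (fst u) (snd u)) p) swap swap).
  - apply fsum_ext; intros [a b]; unfold swap; simpl; rewrite Hs; auto.
  - intros [a b]; reflexivity.
  - intros [a b]; reflexivity.
  - apply finsupp_mul_r; auto.
Qed.

Lemma coupling_mix3 {A B} (p1 p2 p3 : A * B -> R) m1 m2 m3 n1 n2 n3 c1 c2 c3
  (m : A -> R) (n : B -> R) :
  0 <= c1 -> 0 <= c2 -> 0 <= c3 ->
  coupling p1 m1 n1 -> coupling p2 m2 n2 -> coupling p3 m3 n3 ->
  (forall a, m a = c1 * m1 a + c2 * m2 a + c3 * m3 a) ->
  (forall b, n b = c1 * n1 b + c2 * n2 b + c3 * n3 b) ->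
  coupling (fun u => c1 * p1 u + c2 * p2 u + c3 * p3 u) m n.
Proof.
  intros h1 h2 h3 [a0 [a1 [a2 a3]]] [b0 [b1 [b2 b3]]] [e0 [e1 [e2 e3]]] Hm Hn.
  split; [|split; [repeat apply finsupp_plus; apply finsupp_mul_l; auto | split]].
  - intros u; specialize (a0 u); specialize (b0 u); specialize (e0 u).
    assert (0 <= c1 * p1 u) by (apply Rmult_le_pos; auto).
    assert (0 <= c2 * p2 u) by (apply Rmult_le_pos; auto).
    assert (0 <= c3 * p3 u) by (apply Rmult_le_pos; auto); lra.
  - intros a; rewrite fsum_plus, fsum_plus, !fsum_scal, a2, b2, e2; auto;
      try apply finsupp_plus; apply finsupp_mul_l; apply finsupp_row; auto.
  - intros b; rewrite fsum_plus, fsum_plus, !fsum_scal, a3, b3, e3; auto;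
      try apply finsupp_plus; apply finsupp_mul_l; apply finsupp_col; auto.
Qed.

Lemma cost_mix3 {T} (d : T -> T -> R) p (p1 p2 p3 : T * T -> R) c1 c2 c3 :
  finsupp p1 -> finsupp p2 -> finsupp p3 ->
  cost d p (fun u => c1 * p1 u + c2 * p2 u + c3 * p3 u)
  = c1 * cost d p p1 + c2 * cost d p p2 + c3 * cost d p p3.
Proof.
  intros f1 f2 f3; unfold cost.
  rewrite (fsum_ext _ (fun u => (c1 * (p1 u * rpow (d (fst u) (snd u)) p)
                               + c2 * (p2 u * rpow (d (fst u) (snd u)) p))
                               + c3 * (p3 u * rpow (d (fst u) (snd u)) p)))
    by (intros; ring).
  rewrite fsum_plus, fsum_plus, !fsum_scal; auto;
    try apply finsupp_plus; apply finsupp_mul_l, finsupp_mul_r; auto.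
Qed.

Definition margX {X Y} (mu : X * Y -> R) : X -> R := push fst mu.
Definition margY {X Y} (mu : X * Y -> R) : Y -> R := push snd mu.
Definition prod_meas {X Y} (a : X -> R) (b : Y -> R) : X * Y -> R :=
  fun u => a (fst u) * b (snd u).
Definition mix {T} (t : R) (mu nu : T -> R) : T -> R := fun u => (1 - t) * mu u + t * nu u.

Definition marg_prod {X Y} (mu : X * Y -> R) : X * Y -> R := prod_meas (margX mu) (margY mu).

Lemma fin_prob_prod {X Y} (a : X -> R) (b : Y -> R) :
  fin_prob a -> fin_prob b -> fin_prob (prod_meas a b).
Proof.
  rewrite !fin_prob_iff; intros [Ha0 [Ha1 Ha2]] [Hb0 [Hb1 Hb2]]; unfold prod_meas.
  split; [intros; apply Rmult_le_pos; auto|].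
  split; [apply finsupp_prod; auto | rewrite fsum_prod, Ha2, Hb2; auto; ring].
Qed.

Lemma fin_prob_mix {T} (t : R) (mu nu : T -> R) : 0 <= t <= 1 ->
  fin_prob mu -> fin_prob nu -> fin_prob (mix t mu nu).
Proof.
  intros Ht; rewrite !fin_prob_iff; intros [Hm0 [Hm1 Hm2]] [Hn0 [Hn1 Hn2]]; unfold mix.
  split; [intros x; specialize (Hm0 x); specialize (Hn0 x); nra|].
  split; [apply finsupp_plus; apply finsupp_mul_l; auto|].
  rewrite fsum_plus by (apply finsupp_mul_l; auto); rewrite !fsum_scal, Hm2, Hn2; ring.
Qed.

Lemma fin_prob_marg_prod {X Y} (mu : X * Y -> R) : fin_prob mu -> fin_prob (marg_prod mu).
Proof. intros; apply fin_prob_prod; apply fin_prob_push; auto. Qed.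

Lemma margX_prod {X Y} (a : X -> R) (b : Y -> R) :
  fin_prob a -> fin_prob b -> margX (prod_meas a b) = a.
Proof.
  rewrite !fin_prob_iff; intros [Ha0 [Ha1 Ha2]] [Hb0 [Hb1 Hb2]].
  apply functional_extensionality; intros x; unfold margX.
  rewrite <- push_fst by (apply finsupp_prod; auto); unfold prod_meas; simpl.
  rewrite fsum_scal, Hb2; ring.
Qed.

Lemma margY_prod {X Y} (a : X -> R) (b : Y -> R) :
  fin_prob a -> fin_prob b -> margY (prod_meas a b) = b.
Proof.
  rewrite !fin_prob_iff; intros [Ha0 [Ha1 Ha2]] [Hb0 [Hb1 Hb2]].
  apply functional_extensionality; intros y; unfold margY.
  rewrite <- push_snd by (apply finsupp_prod; auto); unfold prod_meas; simpl.
  rewrite (fsum_ext _ (fun x => b y * a x)) by (intros; ring); rewrite fsum_scal, Ha2; ring.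
Qed.

Lemma supp_prod {X Y} (a : X -> R) (b : Y -> R) u :
  (forall x, 0 <= a x) -> (forall y, 0 <= b y) ->
  supp (prod_meas a b) u -> supp a (fst u) /\ supp b (snd u).
Proof.
  unfold supp, prod_meas; intros Ha Hb H; specialize (Ha (fst u)); specialize (Hb (snd u)).
  split; destruct (Req_dec (a (fst u)) 0) as [E|E];
    destruct (Req_dec (b (snd u)) 0) as [E'|E'];
    try rewrite E in H; try rewrite E' in H; lra.
Qed.

Lemma supp_mix {T} t (mu nu : T -> R) u :
  (forall x, 0 <= mu x) -> (forall x, 0 <= nu x) ->
  supp (mix t mu nu) u -> supp mu u \/ supp nu u.
Proof.
  unfold supp, mix; intros Hm Hn H.
  destruct (Rlt_or_le 0 (mu u)); auto; destruct (Rlt_or_le 0 (nu u)); auto.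
  specialize (Hm u); specialize (Hn u).
  replace (mu u) with 0 in H by lra; replace (nu u) with 0 in H by lra; lra.
Qed.

Lemma supp_diameter_bound {T} (d : T -> T -> R) (mu : T -> R) :
  (forall x y, 0 <= d x y) -> finsupp mu ->
  exists D, forall u v, 0 < mu u -> 0 < mu v -> d u v <= D.
Proof.
  intros Hd [l Hl]; exists (sumR (fun u => sumR (fun v => d u v) l) l).
  intros u v Hu Hv; apply Rle_trans with (sumR (fun v => d u v) l).
  - apply sumR_ge_term; auto; apply Hl; lra.
  - apply (sumR_ge_term (fun u => sumR (fun v => d u v) l));
      [intros; apply sumR_nonneg; auto | apply Hl; lra].
Qed.

Definition regroup {A B C D} (w : (A * B) * (C * D)) : (A * C) * (B * D) :=
  ((fst (fst w), fst (snd w)), (snd (fst w), snd (snd w))).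

Lemma regroup_involutive {A B C D} (w : (A * B) * (C * D)) : regroup (regroup w) = w.
Proof. destruct w as [[a b] [c d]]; reflexivity. Qed.

Lemma finsupp_regroup {A B C D} (h : (A * C) * (B * D) -> R) :
  finsupp h -> finsupp (fun w : (A * B) * (C * D) => h (regroup w)).
Proof. apply (finsupp_comp h regroup regroup), regroup_involutive. Qed.

Lemma fsum_regroup {A B C D} (h : (A * C) * (B * D) -> R) :
  finsupp h -> fsum (fun w : (A * B) * (C * D) => h (regroup w)) = fsum h.
Proof. apply (fsum_reindex h regroup regroup); apply regroup_involutive. Qed.

Lemma max_dist_nonneg {X Y} (dX : X -> X -> R) (dY : Y -> Y -> R) :
  (forall x y, 0 <= dX x y) -> (forall x y, 0 <= dY x y) ->
  forall u v, 0 <= max_dist dX dY u v.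
Proof. intros HX HY u v; unfold max_dist; apply Rmax_case; auto. Qed.

Lemma max_dist_symmetric {X Y} (dX : X -> X -> R) (dY : Y -> Y -> R) :
  (forall x y, dX x y = dX y x) -> (forall x y, dY x y = dY y x) ->
  forall u v, max_dist dX dY u v = max_dist dX dY v u.
Proof. intros HX HY u v; unfold max_dist; rewrite HX, HY; auto. Qed.

Definition prod_coupling {X Y} (pA : X * X -> R) (pB : Y * Y -> R) : (X * Y) * (X * Y) -> R :=
  fun w => pA (fst (regroup w)) * pB (snd (regroup w)).

Lemma coupling_prod {X Y} (pA : X * X -> R) (pB : Y * Y -> R) a a' b b' :
  coupling pA a a' -> coupling pB b b' ->
  coupling (prod_coupling pA pB) (prod_meas a b) (prod_meas a' b').
Proof.
  intros [a0 [a1 [a2 a3]]] [b0 [b1 [b2 b3]]].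
  split; [intros; unfold prod_coupling; apply Rmult_le_pos; auto|].
  split; [apply (finsupp_regroup (fun z => pA (fst z) * pB (snd z))), finsupp_prod; auto|].
  split; unfold prod_coupling, prod_meas, regroup; simpl.
  - intros u; rewrite (fsum_prod (fun x => pA (fst u, x)) (fun y => pB (snd u, y)))
      by (apply finsupp_row; auto); rewrite a2, b2; auto.
  - intros v; rewrite (fsum_prod (fun x => pA (x, fst v)) (fun y => pB (y, snd v)))
      by (apply finsupp_col; auto); rewrite a3, b3; auto.
Qed.

Lemma cost_prod_coupling {X Y} (dX : X -> X -> R) (dY : Y -> Y -> R) p
  (pA : X * X -> R) (pB : Y * Y -> R) a a' b b' :
  (forall x y, 0 <= dX x y) -> (forall x y, 0 <= dY x y) ->
  coupling pA a a' -> coupling pB b b' -> fin_prob a -> fin_prob b ->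
  cost (max_dist dX dY) p (prod_coupling pA pB) <= cost dX p pA + cost dY p pB.
Proof.
  intros HX HY HA HB Fa Fb.
  assert (SA : fsum pA = 1) by (rewrite (coupling_total _ _ _ HA); apply fin_prob_iff in Fa; tauto).
  assert (SB : fsum pB = 1) by (rewrite (coupling_total _ _ _ HB); apply fin_prob_iff in Fb; tauto).
  destruct HA as [a0 [a1 _]], HB as [b0 [b1 _]].
  set (wX := fun z : X * X => pA z * rpow (dX (fst z) (snd z)) p).
  set (wY := fun z : Y * Y => pB z * rpow (dY (fst z) (snd z)) p).
  assert (fwX : finsupp wX) by (apply finsupp_mul_r; auto).
  assert (fwY : finsupp wY) by (apply finsupp_mul_r; auto).
  assert (fX : finsupp (fun z => wX (fst z) * pB (snd z))) by (apply finsupp_prod; auto).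
  assert (fY : finsupp (fun z => pA (fst z) * wY (snd z))) by (apply finsupp_prod; auto).
  assert (EX : fsum (fun w : (X * Y) * (X * Y) => wX (fst (regroup w)) * pB (snd (regroup w)))
               = cost dX p pA).
  { rewrite (fsum_regroup (fun z => wX (fst z) * pB (snd z))), fsum_prod, SB by auto.
    unfold cost, wX, wY; ring. }
  assert (EY : fsum (fun w : (X * Y) * (X * Y) => pA (fst (regroup w)) * wY (snd (regroup w)))
               = cost dY p pB).
  { rewrite (fsum_regroup (fun z => pA (fst z) * wY (snd z))), fsum_prod, SA by auto.
    unfold cost, wX, wY; ring. }
  assert (gX := finsupp_regroup _ fX); assert (gY := finsupp_regroup _ fY); simpl in gX, gY.
  rewrite <- EX, <- EY, <- fsum_plus by auto.
  unfold cost; apply fsum_le; [| apply finsupp_plus; auto |].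
  - apply finsupp_mul_r, (finsupp_regroup (fun z => pA (fst z) * pB (snd z))), finsupp_prod; auto.
  - intros w; unfold wX, wY, prod_coupling, max_dist, regroup; simpl.
    assert (h := rpow_max (dX (fst (fst w)) (fst (snd w))) (dY (snd (fst w)) (snd (snd w))) p).
    assert (0 <= pA (fst (fst w), fst (snd w)) * pB (snd (fst w), snd (snd w)))
      by (apply Rmult_le_pos; auto).
    apply Rle_trans with (pA (fst (fst w), fst (snd w)) * pB (snd (fst w), snd (snd w)) *
      (rpow (dX (fst (fst w)) (fst (snd w))) p + rpow (dY (snd (fst w)) (snd (snd w))) p));
      [apply Rmult_le_compat_l; auto | right; ring].
Qed.

Definition couplingX {X Y} (pi : (X * Y) * (X * Y) -> R) : X * X -> R :=
  push (fun w => (fst (fst w), fst (snd w))) pi.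
Definition couplingY {X Y} (pi : (X * Y) * (X * Y) -> R) : Y * Y -> R :=
  push (fun w => (snd (fst w), snd (snd w))) pi.

Lemma coupling_projX {X Y} (pi : (X * Y) * (X * Y) -> R) mu nu :
  coupling pi mu nu -> coupling (couplingX pi) (margX mu) (margX nu).
Proof.
  intros H; destruct (coupling_marginals _ _ _ H) as [-> ->]; destruct H as [h0 [h1 _]].
  apply coupling_of_push; [apply push_nonneg | apply finsupp_push | |]; auto;
    intros a; unfold couplingX, margX; rewrite !push_comp; auto.
Qed.

Lemma coupling_projY {X Y} (pi : (X * Y) * (X * Y) -> R) mu nu :
  coupling pi mu nu -> coupling (couplingY pi) (margY mu) (margY nu).
Proof.
  intros H; destruct (coupling_marginals _ _ _ H) as [-> ->]; destruct H as [h0 [h1 _]].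
  apply coupling_of_push; [apply push_nonneg | apply finsupp_push | |]; auto;
    intros a; unfold couplingY, margY; rewrite !push_comp; auto.
Qed.

Lemma cost_projX {X Y} (dX : X -> X -> R) (dY : Y -> Y -> R) p (pi : (X * Y) * (X * Y) -> R) mu nu :
  0 < p -> (forall x y, 0 <= dX x y) -> coupling pi mu nu ->
  cost dX p (couplingX pi) <= cost (max_dist dX dY) p pi.
Proof.
  intros Hp HX [h0 [h1 _]]; unfold cost, couplingX.
  rewrite (push_spec _ pi (fun z => rpow (dX (fst z) (snd z)) p)) by auto; simpl.
  apply fsum_le; try apply finsupp_mul_r; auto; intros u.
  apply Rmult_le_compat_l, rpow_le; auto; split; auto; apply Rmax_l.
Qed.

Lemma cost_projY {X Y} (dX : X -> X -> R) (dY : Y -> Y -> R) p (pi : (X * Y) * (X * Y) -> R) mu nu :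
  0 < p -> (forall x y, 0 <= dY x y) -> coupling pi mu nu ->
  cost dY p (couplingY pi) <= cost (max_dist dX dY) p pi.
Proof.
  intros Hp HY [h0 [h1 _]]; unfold cost, couplingY.
  rewrite (push_spec _ pi (fun z => rpow (dY (fst z) (snd z)) p)) by auto; simpl.
  apply fsum_le; try apply finsupp_mul_r; auto; intros u.
  apply Rmult_le_compat_l, rpow_le; auto; split; auto; apply Rmax_r.
Qed.

Definition marg_prod_coupling {X Y} (pi : (X * Y) * (X * Y) -> R) : (X * Y) * (X * Y) -> R :=
  prod_coupling (couplingX pi) (couplingY pi).

Lemma coupling_marg_prod {X Y} (pi : (X * Y) * (X * Y) -> R) mu nu :
  coupling pi mu nu -> coupling (marg_prod_coupling pi) (marg_prod mu) (marg_prod nu).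
Proof.
  intros H; apply coupling_prod; [apply (coupling_projX _ _ _ H) | apply (coupling_projY _ _ _ H)].
Qed.

Lemma cost_marg_prod {X Y} (dX : X -> X -> R) (dY : Y -> Y -> R) p
  (pi : (X * Y) * (X * Y) -> R) mu nu :
  0 < p -> (forall x y, 0 <= dX x y) -> (forall x y, 0 <= dY x y) -> fin_prob mu ->
  coupling pi mu nu ->
  cost (max_dist dX dY) p (marg_prod_coupling pi) <= 2 * cost (max_dist dX dY) p pi.
Proof.
  intros Hp HX HY Fm H; eapply Rle_trans.
  - apply (cost_prod_coupling dX dY p _ _ (margX mu) (margX nu) (margY mu) (margY nu)); auto;
      [apply (coupling_projX _ _ _ H) | apply (coupling_projY _ _ _ H)
      | apply fin_prob_push | apply fin_prob_push]; auto.
  - assert (h1 := cost_projX dX dY p pi mu nu Hp HX H).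
    assert (h2 := cost_projY dX dY p pi mu nu Hp HY H); lra.
Qed.

(** Given a coupling [pi] of [mu] and [nu] on X × Y, its
    push along (u, v) ↦ (u, v_X) couples [mu] with the X-marginal of [nu];
    taking the product with the Y-marginal of [nu] yields a coupling of [mu]
    with [marg_prod nu]. *)

Definition coupling_margX {X Y} (pi : (X * Y) * (X * Y) -> R) : (X * Y) * X -> R :=
  push (fun w => (fst w, fst (snd w))) pi.

Definition reassoc {A B C} (w : A * (B * C)) : (A * B) * C := ((fst w, fst (snd w)), snd (snd w)).
Definition dissoc {A B C} (z : (A * B) * C) : A * (B * C) := (fst (fst z), (snd (fst z), snd z)).

Lemma dissoc_reassoc {A B C} (w : A * (B * C)) : dissoc (reassoc w) = w.
Proof. destruct w as [a [b c]]; reflexivity. Qed.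

Lemma reassoc_dissoc {A B C} (z : (A * B) * C) : reassoc (dissoc z) = z.
Proof. destruct z as [[a b] c]; reflexivity. Qed.

Definition cross_coupling {X Y} (pi : (X * Y) * (X * Y) -> R) (nu : X * Y -> R)
  : (X * Y) * (X * Y) -> R :=
  fun w => coupling_margX pi (fst (reassoc w)) * margY nu (snd (reassoc w)).

Definition cross_cost {X Y} (dY : Y -> Y -> R) p (mu nu : X * Y -> R) : R :=
  fsum (fun a => mu a * fsum (fun b => nu b * rpow (dY (snd a) (snd b)) p)).

Lemma coupling_cross {X Y} (pi : (X * Y) * (X * Y) -> R) mu nu :
  fin_prob nu -> coupling pi mu nu -> coupling (cross_coupling pi nu) mu (marg_prod nu).
Proof.
  intros Fn H; apply (fin_prob_push snd), fin_prob_iff in Fn; destruct Fn as [y0 [y1 y2]].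
  fold (margY nu) in y0, y1, y2.
  destruct (coupling_marginals _ _ _ H) as [E1 E2]; destruct H as [h0 [h1 _]].
  assert (fr : finsupp (coupling_margX pi)) by (apply finsupp_push; auto).
  split; [intros; apply Rmult_le_pos; [apply push_nonneg; auto | apply y0]|].
  split; [apply (finsupp_comp (fun z => coupling_margX pi (fst z) * margY nu (snd z))
            reassoc dissoc), finsupp_prod; auto; apply dissoc_reassoc|].
  split; unfold cross_coupling, reassoc; simpl.
  - intros u; rewrite (fsum_prod (fun x => coupling_margX pi (u, x)) (margY nu))
      by (try apply finsupp_row; auto).
    rewrite y2, Rmult_1_r, push_fst by auto; unfold coupling_margX; rewrite push_comp by auto.
    rewrite E1; reflexivity.
  - intros v; unfold marg_prod, prod_meas.
    rewrite (fsum_ext _ (fun a => margY nu (snd v) * coupling_margX pi (a, fst v)))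
      by (intros; ring).
    rewrite fsum_scal, push_snd by auto; unfold coupling_margX; rewrite push_comp by auto.
    rewrite E2; unfold margX; rewrite push_comp, Rmult_comm by auto; reflexivity.
Qed.

Lemma cross_coupling_Xpart {X Y} (dX : X -> X -> R) (dY : Y -> Y -> R) p
  (pi : (X * Y) * (X * Y) -> R) mu nu :
  0 < p -> (forall x y, 0 <= dX x y) -> fin_prob nu -> coupling pi mu nu ->
  fsum (fun w => cross_coupling pi nu w * rpow (dX (fst (fst w)) (fst (snd w))) p)
  <= cost (max_dist dX dY) p pi.
Proof.
  intros Hp HX Fn [h0 [h1 _]].
  apply (fin_prob_push snd), fin_prob_iff in Fn; destruct Fn as [y0 [y1 y2]].
  fold (margY nu) in y0, y1, y2.
  set (rho := coupling_margX pi); assert (fr : finsupp rho) by (apply finsupp_push; auto).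
  set (G1 := fun z : ((X * Y) * X) * Y =>
    (rho (fst z) * rpow (dX (fst (fst (fst z))) (snd (fst z))) p) * margY nu (snd z)).
  assert (fG1 : finsupp G1)
    by exact (finsupp_prod (fun z => rho z * rpow (dX (fst (fst z)) (snd z)) p) (margY nu)
                (finsupp_mul_r _ _ fr) y1).
  rewrite (fsum_ext _ (fun w => G1 (reassoc w))) by (intros; unfold G1, rho, cross_coupling; simpl; ring).
  rewrite (fsum_reindex G1 reassoc dissoc) by (auto; try apply dissoc_reassoc; apply reassoc_dissoc).
  unfold G1; rewrite (fsum_prod (fun z => rho z * rpow (dX (fst (fst z)) (snd z)) p) (margY nu))
    by (try apply finsupp_mul_r; auto).
  rewrite y2, Rmult_1_r; unfold rho, coupling_margX.
  rewrite (push_spec _ pi (fun z => rpow (dX (fst (fst z)) (snd z)) p)) by auto; simpl.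
  unfold cost; apply fsum_le; try apply finsupp_mul_r; auto; intros u.
  apply Rmult_le_compat_l, rpow_le; auto; split; auto; apply Rmax_l.
Qed.

Lemma cross_coupling_Ypart {X Y} (dY : Y -> Y -> R) p (pi : (X * Y) * (X * Y) -> R) mu nu :
  fin_prob nu -> coupling pi mu nu ->
  fsum (fun w => cross_coupling pi nu w * rpow (dY (snd (fst w)) (snd (snd w))) p)
  = cross_cost dY p mu nu.
Proof.
  intros Fn [h0 [h1 [h2 _]]].
  assert (n1 : finsupp nu) by (apply fin_prob_iff in Fn; tauto).
  apply (fin_prob_push snd), fin_prob_iff in Fn; destruct Fn as [y0 [y1 y2]].
  fold (margY nu) in y0, y1, y2.
  set (rho := coupling_margX pi); assert (fr : finsupp rho) by (apply finsupp_push; auto).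
  set (G2 := fun z : ((X * Y) * X) * Y =>
    rho (fst z) * (margY nu (snd z) * rpow (dY (snd (fst (fst z))) (snd z)) p)).
  assert (fG2 : finsupp G2).
  { apply (finsupp_ext (fun z => (rho (fst z) * margY nu (snd z)) *
                                  rpow (dY (snd (fst (fst z))) (snd z)) p));
      [intros; unfold G2; ring | apply finsupp_mul_r, finsupp_prod; auto]. }
  set (Gm := fun a : X * Y => fsum (fun y => margY nu y * rpow (dY (snd a) y) p)).
  rewrite (fsum_ext _ (fun w => G2 (reassoc w))) by (intros; unfold G2, rho, cross_coupling; simpl; ring).
  rewrite (fsum_reindex G2 reassoc dissoc) by (auto; try apply dissoc_reassoc; apply reassoc_dissoc).
  rewrite fsum_fubini by auto.
  rewrite (fsum_ext _ (fun z1 => rho z1 * Gm (fst z1)))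
    by (intros; unfold G2, Gm; simpl; apply fsum_scal).
  unfold rho, coupling_margX; rewrite (push_spec _ pi (fun z => Gm (fst z))) by auto; simpl.
  rewrite fsum_fubini by (apply finsupp_mul_r; auto); simpl.
  unfold cross_cost; apply fsum_ext; intros a.
  rewrite (fsum_ext _ (fun b => Gm a * pi (a, b))) by (intros; ring); rewrite fsum_scal, h2.
  unfold Gm, margY; rewrite (push_spec snd nu (fun y => rpow (dY (snd a) y) p)) by auto; ring.
Qed.

Lemma cost_cross {X Y} (dX : X -> X -> R) (dY : Y -> Y -> R) p (pi : (X * Y) * (X * Y) -> R) mu nu :
  0 < p -> (forall x y, 0 <= dX x y) -> (forall x y, 0 <= dY x y) ->
  fin_prob nu -> coupling pi mu nu ->
  cost (max_dist dX dY) p (cross_coupling pi nu) <= cost (max_dist dX dY) p pi + cross_cost dY p mu nu.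
Proof.
  intros Hp HX HY Fn H.
  destruct (coupling_cross pi mu nu Fn H) as [k0 [k1 _]].
  rewrite <- (cross_coupling_Ypart dY p pi mu nu) by auto.
  eapply Rle_trans; [|apply Rplus_le_compat_r, (cross_coupling_Xpart dX dY p pi mu nu); auto].
  rewrite <- fsum_plus by (apply finsupp_mul_r; auto).
  unfold cost; apply fsum_le; try apply finsupp_plus; try apply finsupp_mul_r; auto.
  intros w; unfold max_dist; rewrite <- Rmult_plus_distr_l.
  apply Rmult_le_compat_l, rpow_max; auto.
Qed.

Lemma cross_cost_sym {X Y} (dY : Y -> Y -> R) p (mu nu : X * Y -> R) :
  (forall x y, dY x y = dY y x) -> finsupp mu -> finsupp nu ->
  cross_cost dY p mu nu = cross_cost dY p nu mu.
Proof.
  intros Hs Hm Hn; unfold cross_cost.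
  set (h := fun w : (X * Y) * (X * Y) =>
    mu (fst w) * (nu (snd w) * rpow (dY (snd (fst w)) (snd (snd w))) p)).
  assert (fh : finsupp h).
  { apply (finsupp_ext (fun w => (mu (fst w) * nu (snd w)) *
                                  rpow (dY (snd (fst w)) (snd (snd w))) p));
      [intros; unfold h; ring | apply finsupp_mul_r, finsupp_prod; auto]. }
  rewrite (fsum_ext _ (fun a => fsum (fun b => h (a, b))))
    by (intros; unfold h; simpl; symmetry; apply fsum_scal).
  rewrite (fsum_swap h fh); apply fsum_ext; intros b; unfold h; simpl.
  rewrite <- fsum_scal; apply fsum_ext; intros a; rewrite Hs; ring.
Qed.

Lemma point_spread_bound {X Y} (dX : X -> X -> R) (dY : Y -> Y -> R) p (nu : X * Y -> R) D a c :
  0 < p -> (forall x y, 0 <= dX x y) -> (forall x y, 0 <= dY x y) ->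
  (forall x y z, dY x z <= dY x y + dY y z) -> fin_prob nu -> 0 < nu c ->
  (forall u v, 0 < nu u -> 0 < nu v -> max_dist dX dY u v <= D) ->
  fsum (fun b => nu b * rpow (dY (snd a) (snd b)) p)
  <= rpow 2 p * (rpow (max_dist dX dY a c) p + rpow D p).
Proof.
  intros Hp HX HY Ht Fn Nc HDb; apply fin_prob_iff in Fn; destruct Fn as [n0 [n1 n2]].
  set (K := rpow 2 p * (rpow (max_dist dX dY a c) p + rpow D p)).
  rewrite <- (Rmult_1_r K), <- n2, <- fsum_scal.
  apply fsum_le; [apply finsupp_mul_r | apply finsupp_mul_l |]; auto; intros b.
  destruct (Req_dec (nu b) 0) as [Zb|Zb]; [rewrite Zb; lra|].
  assert (Nb : 0 < nu b) by (specialize (n0 b); lra).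
  rewrite Rmult_comm; apply Rmult_le_compat_r; [lra|]; unfold K.
  assert (md : 0 <= max_dist dX dY a c) by (apply max_dist_nonneg; auto).
  assert (HD : 0 <= D)
    by (apply Rle_trans with (max_dist dX dY c c); [apply max_dist_nonneg | apply HDb]; auto).
  eapply Rle_trans; [|apply rpow_add; auto].
  apply rpow_le; auto; split; auto.
  eapply Rle_trans; [apply (Ht _ (snd c)) | apply Rplus_le_compat; [apply Rmax_r|]].
  eapply Rle_trans; [|apply (HDb c b Nc Nb)]; apply Rmax_r.
Qed.

(** The Y-spread of [mu] against [nu] is at most 2^p (cost pi + D^p) when
    [pi] couples [mu] and [nu] and D bounds the diameter of the support of
    [nu]: [pi] moves each point of [supp mu] into [supp nu]. *)
Lemma cross_cost_bound {X Y} (dX : X -> X -> R) (dY : Y -> Y -> R) p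
  (pi : (X * Y) * (X * Y) -> R) mu nu D :
  0 < p -> (forall x y, 0 <= dX x y) -> (forall x y, 0 <= dY x y) ->
  (forall x y z, dY x z <= dY x y + dY y z) ->
  fin_prob mu -> fin_prob nu -> coupling pi mu nu ->
  (forall u v, 0 < nu u -> 0 < nu v -> max_dist dX dY u v <= D) ->
  cross_cost dY p mu nu <= rpow 2 p * (cost (max_dist dX dY) p pi + rpow D p).
Proof.
  intros Hp HX HY Ht Fm Fn H HDb.
  assert (SP : fsum pi = 1) by (rewrite (coupling_total _ _ _ H); apply fin_prob_iff in Fm; tauto).
  destruct H as [h0 [h1 [h2 h3]]].
  set (d := max_dist dX dY).
  set (Gn := fun a : X * Y => fsum (fun b => nu b * rpow (dY (snd a) (snd b)) p)).
  set (K := fun u : (X * Y) * (X * Y) => rpow 2 p * (rpow (d (fst u) (snd u)) p + rpow D p)).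
  assert (E : cross_cost dY p mu nu = fsum (fun u => pi u * Gn (fst u))).
  { rewrite fsum_fubini by (apply finsupp_mul_r; auto); unfold cross_cost.
    apply fsum_ext; intros a; simpl; rewrite <- h2, Rmult_comm, <- fsum_scal.
    apply fsum_ext; intros; unfold Gn; ring. }
  assert (Hpt : forall u, pi u * Gn (fst u) <= pi u * K u).
  { intros u; destruct (Req_dec (pi u) 0) as [Z|Z]; [rewrite Z; lra|].
    assert (Nu : 0 < nu (snd u)).
    { rewrite <- h3; eapply Rlt_le_trans; [|apply (fsum_ge_term (fun a => pi (a, snd u)) (fst u))];
        [rewrite <- surjective_pairing; specialize (h0 u); lra
        | intros; apply h0 | apply finsupp_col; auto]. }
    apply Rmult_le_compat_l; [auto | apply point_spread_bound; auto]. }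
  rewrite E; apply Rle_trans with (fsum (fun u => pi u * K u));
    [apply fsum_le; try apply finsupp_mul_r; auto|].
  unfold K; rewrite (fsum_ext _ (fun u => rpow 2 p * (pi u * rpow (d (fst u) (snd u)) p)
                                     + (rpow 2 p * rpow D p) * pi u)) by (intros; ring).
  rewrite fsum_plus, !fsum_scal, SP by (apply finsupp_mul_l; try apply finsupp_mul_r; auto).
  unfold cost; lra.
Qed.

Definition marg_path {X Y} (t : R) (mu : X * Y -> R) : X * Y -> R := mix t mu (marg_prod mu).

Section PathEstimate.

Variables (X Y : Type) (dX : X -> X -> R) (dY : Y -> Y -> R) (p : R).
Hypotheses (MX : is_metric dX) (MY : is_metric dY) (Hp : 0 < p).

Let d := max_dist dX dY.

Lemma max_dist_metric_nonneg : forall u v, 0 <= d u v.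
Proof. destruct MX as [X0 _], MY as [Y0 _]; apply max_dist_nonneg; auto. Qed.

Lemma max_dist_metric_sym : forall u v, d u v = d v u.
Proof. destruct MX as [_ [_ [Xs _]]], MY as [_ [_ [Ys _]]]; apply max_dist_symmetric; auto. Qed.

Lemma cross_couplings (pi : (X * Y) * (X * Y) -> R) mu mu' D :
  fin_prob mu -> fin_prob mu' -> coupling pi mu mu' ->
  (forall u v, 0 < mu u -> 0 < mu v -> d u v <= D) ->
  let bound := cost d p pi + rpow 2 p * (cost d p pi + rpow D p) in
  (exists k, coupling k mu (marg_prod mu') /\ cost d p k <= bound) /\
  (exists k, coupling k mu' (marg_prod mu) /\ cost d p k <= bound).
Proof.
  intros Fm Fm' H HDb bound.
  destruct MX as [X0 _], MY as [Y0 [_ [Ys Yt]]].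
  assert (Ht := coupling_transpose _ _ _ H).
  assert (Ec : cost d p (transpose pi) = cost d p pi)
    by (apply cost_transpose; [apply max_dist_metric_sym | eapply coupling_finsupp; eauto]).
  assert (Spread : cross_cost dY p mu' mu <= rpow 2 p * (cost d p pi + rpow D p))
    by (rewrite <- Ec; apply (cross_cost_bound dX dY p (transpose pi) mu' mu D); auto).
  split.
  - exists (cross_coupling pi mu'); split; [apply coupling_cross; auto|].
    eapply Rle_trans; [apply (cost_cross dX dY p pi mu mu'); auto|].
    assert (fm : finsupp mu) by (apply fin_prob_iff in Fm; tauto).
    assert (fm' : finsupp mu') by (apply fin_prob_iff in Fm'; tauto).
    rewrite cross_cost_sym by auto.
    unfold bound, d in *; lra.
  - exists (cross_coupling (transpose pi) mu); split; [apply coupling_cross; auto|].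
    eapply Rle_trans; [apply (cost_cross dX dY p (transpose pi) mu' mu); auto|].
    unfold bound, d in *; lra.
Qed.

Lemma path_cost_arith (c ck cP C2 Dp a b e : R) :
  0 <= c -> 0 <= C2 -> 0 <= Dp -> 0 <= a <= 1 -> 0 <= b <= 1 -> 0 <= e <= 1 ->
  0 <= ck <= c + C2 * (c + Dp) -> 0 <= cP <= 2 * c ->
  a * c + b * ck + e * cP <= (4 + C2) * c + b * (C2 * Dp).
Proof.
  intros c0 C0 D0 Ha Hb He Hk HP.
  assert (a * c <= 1 * c) by (apply Rmult_le_compat_r; lra).
  assert (b * ck <= b * (c + C2 * (c + Dp))) by (apply Rmult_le_compat_l; lra).
  assert (b * (c + C2 * c) <= 1 * (c + C2 * c))
    by (apply Rmult_le_compat_r; [assert (0 <= C2 * c) by (apply Rmult_le_pos; auto) |]; lra).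
  assert (e * cP <= 1 * (2 * c)) by (apply Rmult_le_compat; lra).
  nra.
Qed.

Lemma path_coupling (pi : (X * Y) * (X * Y) -> R) mu mu' D t s :
  fin_prob mu -> fin_prob mu' -> coupling pi mu mu' ->
  (forall u v, 0 < mu u -> 0 < mu v -> d u v <= D) ->
  0 <= t <= 1 -> 0 <= s <= 1 ->
  exists G, coupling G (marg_path t mu) (marg_path s mu') /\
    cost d p G <= (4 + rpow 2 p) * cost d p pi + Rabs (t - s) * (rpow 2 p * rpow D p).
Proof.
  intros Fm Fm' H HDb Ht Hs.
  destruct MX as [X0 _], MY as [Y0 _].
  destruct (cross_couplings pi mu mu' D Fm Fm' H HDb) as [[k1 [Hk1 ck1]] [k2 [Hk2 ck2]]].
  set (Pi := marg_prod_coupling pi).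
  assert (HPi : coupling Pi (marg_prod mu) (marg_prod mu')) by (apply coupling_marg_prod; auto).
  assert (cPi : cost d p Pi <= 2 * cost d p pi) by (apply (cost_marg_prod dX dY p pi mu mu'); auto).
  assert (c0 := cost_nonneg d p _ _ _ H).
  assert (C0 := rpow_nonneg 2 p); assert (D0 := rpow_nonneg D p).
  assert (cP0 := cost_nonneg d p _ _ _ HPi).
  destruct (Rle_lt_dec t s) as [ts|ts].
  - (* t <= s: the extra weight s - t of marg_prod mu' is fed from mu via k1 *)
    exists (fun u => (1 - s) * pi u + (s - t) * k1 u + t * Pi u); split.
    + apply (coupling_mix3 pi k1 Pi mu mu (marg_prod mu) mu' (marg_prod mu') (marg_prod mu'));
        auto; try lra; intros; unfold marg_path, mix; ring.
    + rewrite cost_mix3 by (eapply coupling_finsupp; eauto).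
      rewrite Rabs_minus_sym, Rabs_right by lra.
      assert (0 <= cost d p k1) by (eapply cost_nonneg; eauto).
      apply path_cost_arith; auto; lra.
  - (* s < t: the extra weight t - s of marg_prod mu is matched with mu' via k2 *)
    exists (fun u => (1 - t) * pi u + (t - s) * transpose k2 u + s * Pi u); split.
    + apply (coupling_mix3 pi (transpose k2) Pi mu (marg_prod mu) (marg_prod mu) mu' mu'
               (marg_prod mu')); auto; try lra; try (apply coupling_transpose; auto);
        intros; unfold marg_path, mix; ring.
    + rewrite cost_mix3 by (try apply (finsupp_comp k2 swap swap); try (intros []; reflexivity);
                           eapply coupling_finsupp; eauto).
      rewrite cost_transpose by (try apply max_dist_metric_sym; eapply coupling_finsupp; eauto).
      rewrite Rabs_right by lra.
      assert (0 <= cost d p k2) by (eapply cost_nonneg; eauto).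
      apply path_cost_arith; auto; lra.
Qed.

End PathEstimate.

Definition down_closed {T} (K : (T -> Prop) -> Prop) : Prop :=
  forall s s', K s -> (forall x, s' x -> s x) -> K s'.

Definition image_fst {X Y} (s : X * Y -> Prop) : X -> Prop := fun x => exists u, s u /\ fst u = x.
Definition image_snd {X Y} (s : X * Y -> Prop) : Y -> Prop := fun y => exists u, s u /\ snd u = y.
Definition prod_set {X Y} (A : X -> Prop) (B : Y -> Prop) : X * Y -> Prop :=
  fun u => A (fst u) /\ B (snd u).

Record product_compatible {X Y} (KXY : (X * Y -> Prop) -> Prop)
  (KX : (X -> Prop) -> Prop) (KY : (Y -> Prop) -> Prop) : Prop := {
  down_XY : down_closed KXY;
  down_X : down_closed KX;
  down_Y : down_closed KY;
  proj_fst : forall s, KXY s -> KX (image_fst s);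
  proj_snd : forall s, KXY s -> KY (image_snd s);
  prod_simplex : forall A B, KX A -> KY B -> KXY (prod_set A B) }.

(** [clamp] extends a path parametrized by [0, 1] to all of R. *)
Definition clamp (t : R) : R := Rmax 0 (Rmin 1 t).

Lemma clamp_range t : 0 <= clamp t <= 1.
Proof. unfold clamp; split; [apply Rmax_l | apply Rmax_lub; [lra | apply Rmin_l]]. Qed.

Lemma clamp_id t : 0 <= t <= 1 -> clamp t = t.
Proof. intros; unfold clamp; rewrite Rmin_right, Rmax_right; lra. Qed.

Lemma linear_bound_small (C B E c h : R) : 0 < C -> 0 <= B -> 0 < E ->
  0 <= c < E / (2 * C) -> 0 <= h < E / (2 * (B + 1)) -> C * c + h * B < E.
Proof.
  intros HC HB HE Hc Hh.
  assert (C * c < E / 2).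
  { replace (E / 2) with (C * (E / (2 * C))) by (field; lra); apply Rmult_lt_compat_l; lra. }
  assert (h * B <= E / (2 * (B + 1)) * B) by (apply Rmult_le_compat_r; lra).
  assert (E / (2 * (B + 1)) * B < E / 2).
  { apply Rmult_lt_reg_r with (2 * (B + 1)); [lra|].
    replace (E / (2 * (B + 1)) * B * (2 * (B + 1))) with (E * B) by (field; lra).
    replace (E / 2 * (2 * (B + 1))) with (E * B + E) by (field; lra); lra. }
  lra.
Qed.

Section ThickeningProduct.

Variables (X Y : Type) (dX : X -> X -> R) (dY : Y -> Y -> R) (p : R).
Variables (KXY : (X * Y -> Prop) -> Prop) (KX : (X -> Prop) -> Prop) (KY : (Y -> Prop) -> Prop).
Hypotheses (MX : is_metric dX) (MY : is_metric dY) (Hp : 0 < p).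
Hypothesis (HK : product_compatible KXY KX KY).

Let d := max_dist dX dY.
Let TXY := Thick (X * Y) KXY.
Let TXxTY := (Thick X KX * Thick Y KY)%type.

Lemma margX_thick (m : TXY) : fin_prob (margX (proj1_sig m)) /\ KX (supp (margX (proj1_sig m))).
Proof.
  destruct m as [m [Fm Km]]; simpl; split; [apply fin_prob_push; auto|].
  apply (down_X _ _ _ HK _ _ (proj_fst _ _ _ HK _ Km)); intros x Hx.
  apply supp_push in Hx; [destruct Hx as [u [Hu E]]; exists u; auto | apply fin_prob_nonneg; auto].
Qed.

Lemma margY_thick (m : TXY) : fin_prob (margY (proj1_sig m)) /\ KY (supp (margY (proj1_sig m))).
Proof.
  destruct m as [m [Fm Km]]; simpl; split; [apply fin_prob_push; auto|].
  apply (down_Y _ _ _ HK _ _ (proj_snd _ _ _ HK _ Km)); intros y Hy.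
  apply supp_push in Hy; [destruct Hy as [u [Hu E]]; exists u; auto | apply fin_prob_nonneg; auto].
Qed.

Lemma prod_thick (y : TXxTY) :
  let mu := prod_meas (proj1_sig (fst y)) (proj1_sig (snd y)) in fin_prob mu /\ KXY (supp mu).
Proof.
  destruct y as [[a [Fa Ka]] [b [Fb Kb]]]; simpl; split; [apply fin_prob_prod; auto|].
  apply (down_XY _ _ _ HK _ _ (prod_simplex _ _ _ HK _ _ Ka Kb)); intros u Hu.
  apply supp_prod in Hu; auto; apply fin_prob_nonneg; auto.
Qed.

(** Along the path, the support stays inside the product of the projections
    of [supp m], which is a simplex. *)
Lemma path_thick t (m : TXY) :
  let mu := marg_path (clamp t) (proj1_sig m) in fin_prob mu /\ KXY (supp mu).
Proof.
  destruct m as [m [Fm Km]]; simpl.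
  assert (Fp := fin_prob_marg_prod m Fm); split; [apply fin_prob_mix; auto; apply clamp_range|].
  assert (Kp := prod_simplex _ _ _ HK _ _ (proj_fst _ _ _ HK _ Km) (proj_snd _ _ _ HK _ Km)).
  apply (down_XY _ _ _ HK _ _ Kp); intros u Hu.
  apply supp_mix in Hu; try apply fin_prob_nonneg; auto.
  destruct Hu as [Hu|Hu]; [split; exists u; auto|].
  apply supp_prod in Hu; try (apply fin_prob_nonneg, fin_prob_push; auto).
  destruct Hu as [H1 H2]; split.
  - apply supp_push in H1; [auto | apply fin_prob_nonneg; auto].
  - apply supp_push in H2; [auto | apply fin_prob_nonneg; auto].
Qed.

Definition thick_margins (m : TXY) : TXxTY :=
  (exist _ (margX (proj1_sig m)) (margX_thick m), exist _ (margY (proj1_sig m)) (margY_thick m)).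

Definition thick_prod (y : TXxTY) : TXY :=
  exist _ (prod_meas (proj1_sig (fst y)) (proj1_sig (snd y))) (prod_thick y).

Definition thick_path (t : R) (m : TXY) : TXY :=
  exist _ (marg_path (clamp (1 - t)) (proj1_sig m)) (path_thick (1 - t) m).

Let dXY := thick_dist d p KXY.
Let dXxY := max_dist (thick_dist dX p KX) (thick_dist dY p KY).

(** Projected couplings show that f is continuous ... *)
Lemma thick_margins_continuous : dcontinuous dXY dXxY thick_margins.
Proof.
  assert (HX : forall x y, 0 <= dX x y) by apply MX.
  assert (HY : forall x y, 0 <= dY x y) by apply MY.
  intros [m [Fm Km]] eps He.
  destruct (Wp_small_of_cost dX p Hp eps He) as [E1 [E10 HE1]].
  destruct (Wp_small_of_cost dY p Hp eps He) as [E2 [E20 HE2]].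
  destruct (cost_small_of_Wp d p Hp (Rmin E1 E2) (Rmin_pos _ _ E10 E20)) as [de [de0 Hde]].
  exists de; split; auto; intros [m' [Fm' Km']] Hd; unfold dXY, thick_dist in Hd; simpl in Hd.
  destruct (Hde m m' Fm Fm' Hd) as [pi [Hpi Hc]].
  unfold dXxY, thick_margins, max_dist, thick_dist; simpl; apply Rmax_lub_lt.
  - apply (HE1 (couplingX pi)); try apply fin_prob_push; auto; [apply (coupling_projX _ _ _ Hpi)|].
    eapply Rle_lt_trans; [apply (cost_projX dX dY p pi m m'); auto|].
    eapply Rlt_le_trans; [apply Hc | apply Rmin_l].
  - apply (HE2 (couplingY pi)); try apply fin_prob_push; auto; [apply (coupling_projY _ _ _ Hpi)|].
    eapply Rle_lt_trans; [apply (cost_projY dX dY p pi m m'); auto|].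
    eapply Rlt_le_trans; [apply Hc | apply Rmin_r].
Qed.

(** ... and product couplings that g is continuous. *)
Lemma thick_prod_continuous : dcontinuous dXxY dXY thick_prod.
Proof.
  assert (HX : forall x y, 0 <= dX x y) by apply MX.
  assert (HY : forall x y, 0 <= dY x y) by apply MY.
  intros [[a [Fa Ka]] [b [Fb Kb]]] eps He.
  destruct (Wp_small_of_cost d p Hp eps He) as [E [E0 HE]].
  destruct (cost_small_of_Wp dX p Hp (E / 2)) as [d1 [d10 Hd1]]; [lra|].
  destruct (cost_small_of_Wp dY p Hp (E / 2)) as [d2 [d20 Hd2]]; [lra|].
  exists (Rmin d1 d2); split; [apply Rmin_pos; auto|].
  intros [[a' [Fa' Ka']] [b' [Fb' Kb']]] Hd; unfold dXxY, max_dist at 1, thick_dist in Hd; simpl in Hd.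
  assert (Ha : Wp dX p a a' < d1)
    by (eapply Rle_lt_trans; [apply Rmax_l | eapply Rlt_le_trans; [apply Hd | apply Rmin_l]]).
  assert (Hb : Wp dY p b b' < d2)
    by (eapply Rle_lt_trans; [apply Rmax_r | eapply Rlt_le_trans; [apply Hd | apply Rmin_r]]).
  destruct (Hd1 a a' Fa Fa' Ha) as [pA [HA cA]], (Hd2 b b' Fb Fb' Hb) as [pB [HB cB]].
  unfold dXY, thick_prod, thick_dist; simpl.
  apply (HE (prod_coupling pA pB)); try apply fin_prob_prod; auto; [apply coupling_prod; auto|].
  eapply Rle_lt_trans; [apply (cost_prod_coupling dX dY p pA pB a a' b b'); auto | lra].
Qed.

Lemma thick_path_homotopy : dhomotopy dXY dXY thick_path.
Proof.
  intros t [m [Fm Km]] eps Ht He.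
  destruct (Wp_small_of_cost d p Hp eps He) as [E [E0 HE]].
  destruct (supp_diameter_bound d m) as [D HD];
    [apply max_dist_metric_nonneg; auto | apply fin_prob_iff in Fm; tauto|].
  set (C := 4 + rpow 2 p); assert (C0 : 0 < C) by (unfold C; assert (h := rpow_nonneg 2 p); lra).
  set (B := rpow 2 p * rpow D p).
  assert (B0 : 0 <= B) by (unfold B; apply Rmult_le_pos; apply rpow_nonneg).
  destruct (cost_small_of_Wp d p Hp (E / (2 * C))) as [d1 [d10 Hd1]];
    [apply Rdiv_lt_0_compat; lra|].
  set (d2 := E / (2 * (B + 1))); assert (d20 : 0 < d2) by (unfold d2; apply Rdiv_lt_0_compat; lra).
  exists (Rmin d1 d2); split; [apply Rmin_pos; auto|].
  intros s [m' [Fm' Km']] Hs Hts Hd; unfold dXY, thick_dist in Hd |- *; simpl in Hd |- *.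
  destruct (Hd1 m m' Fm Fm') as [pi [Hpi Hc]]; [eapply Rlt_le_trans; [apply Hd | apply Rmin_l]|].
  rewrite !clamp_id by lra.
  destruct (path_coupling X Y dX dY p MX MY Hp pi m m' D (1 - t) (1 - s) Fm Fm' Hpi HD)
    as [G [HG cG]]; try lra.
  apply (HE G); try (apply fin_prob_mix; try apply fin_prob_marg_prod; auto; lra); auto.
  eapply Rle_lt_trans; [apply cG|]; fold d C B.
  replace (1 - t - (1 - s)) with (- (t - s)) by ring; rewrite Rabs_Ropp.
  apply linear_bound_small; auto; [split; [eapply cost_nonneg; eauto | auto] | split].
  - apply Rabs_pos.
  - eapply Rlt_le_trans; [apply Hts | apply Rmin_r].
Qed.

Theorem thickening_product_equiv : homotopy_equivalent dXY dXxY.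
Proof.
  exists thick_margins, thick_prod.
  split; [apply thick_margins_continuous|]; split; [apply thick_prod_continuous|]; split.
  - exists thick_path; split; [apply thick_path_homotopy|]; split; intros [m Hm];
      apply subset_eq_compat; simpl; rewrite clamp_id by lra;
      apply functional_extensionality; intros u; unfold marg_path, marg_prod, mix; simpl; ring.
  - exists (fun (_ : R) y => y); split; [intros t y eps _ He; exists eps; split; auto|].
    split; [|auto]; intros [[a [Fa Ka]] [b [Fb Kb]]]; unfold thick_margins, thick_prod; simpl.
    f_equal; apply subset_eq_compat; simpl; symmetry; [apply margX_prod | apply margY_prod]; auto.
Qed.

End ThickeningProduct.

(** Both are governed by comparisons of a distance
    with r, strict or not, which commute with taking maxima. *)

Definition within (closed : bool) (a : R) (r : Rbar) : Prop :=
  if closed then Rbar_le (Finite a) r else Rbar_lt (Finite a) r.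

Lemma within_mono c a b r : a <= b -> within c b r -> within c a r.
Proof.
  intros H; destruct c; unfold within; intros H'.
  - apply (Rbar_le_trans _ (Finite b)); auto; apply H.
  - apply (Rbar_le_lt_trans _ (Finite b)); auto; apply H.
Qed.

Lemma within_max c a b r : within c (Rmax a b) r <-> within c a r /\ within c b r.
Proof.
  split.
  - intros H; split; eapply within_mono; eauto; [apply Rmax_l | apply Rmax_r].
  - intros [Ha Hb]; apply Rmax_case; auto.
Qed.

Lemma VR_product_compatible {X Y} (dX : X -> X -> R) (dY : Y -> Y -> R) r :
  product_compatible (VR (max_dist dX dY) r) (VR dX r) (VR dY r).
Proof.
  split; unfold down_closed, VR.
  - intros s s' H Hs x y Hx Hy; auto.
  - intros s s' H Hs x y Hx Hy; auto.
  - intros s s' H Hs x y Hx Hy; auto.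
  - intros s H x y [u [Hu <-]] [v [Hv <-]].
    exact (proj1 (proj1 (within_max true _ _ r) (H u v Hu Hv))).
  - intros s H x y [u [Hu <-]] [v [Hv <-]].
    exact (proj2 (proj1 (within_max true _ _ r) (H u v Hu Hv))).
  - intros A B HA HB u v [H1 H2] [H3 H4]; unfold max_dist.
    apply (proj2 (within_max true _ _ r)); split; [apply HA | apply HB]; auto.
Qed.

Lemma Cech_product_compatible {X Y} (c : bool) (dX : X -> X -> R) (dY : Y -> Y -> R) r :
  product_compatible (Cech c (max_dist dX dY) r) (Cech c dX r) (Cech c dY r).
Proof.
  split; unfold down_closed, Cech.
  - intros s s' [z H] Hs; exists z; auto.
  - intros s s' [z H] Hs; exists z; auto.
  - intros s s' [z H] Hs; exists z; auto.
  - intros s [z H]; exists (fst z); intros x [u [Hu <-]].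
    exact (proj1 (proj1 (within_max c _ _ r) (H u Hu))).
  - intros s [z H]; exists (snd z); intros y [u [Hu <-]].
    exact (proj2 (proj1 (within_max c _ _ r) (H u Hu))).
  - intros A B [za HA] [zb HB]; exists (za, zb); intros u [H1 H2].
    unfold max_dist; apply (proj2 (within_max c _ _ r)); split; [apply HA | apply HB]; auto.
Qed.

(** Corollary 5.2 (only p > 0 is needed): the Vietoris–Rips and Čech
    metric thickenings of X × Y are homotopy equivalent to the products of
    those of X and Y. *)
Theorem corollary5p2 (p : R) (r : Rbar) (closed : bool)
  (X Y : Type) (dX : X -> X -> R) (dY : Y -> Y -> R) :
  1 <= p -> Rbar_le (Finite 0) r ->
  is_metric dX -> is_metric dY ->
  homotopy_equivalent
    (thick_dist (max_dist dX dY) p (VR (max_dist dX dY) r))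
    (max_dist (thick_dist dX p (VR dX r)) (thick_dist dY p (VR dY r)))
  /\
  homotopy_equivalent
    (thick_dist (max_dist dX dY) p (Cech closed (max_dist dX dY) r))
    (max_dist (thick_dist dX p (Cech closed dX r))
              (thick_dist dY p (Cech closed dY r))).
Proof.
  intros Hp _ MX MY; assert (Hp0 : 0 < p) by lra; split.
  - apply thickening_product_equiv; auto; apply VR_product_compatible.
  - apply thickening_product_equiv; auto; apply Cech_product_compatible.
Qed.
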